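(* Let $\mathcal H$ be a separable infinite-dimensional Hilbert space, $\omega\in(0,1)$, and let $\mathfrak i$ be the principal Calkin space generated by the sequence $(\omega^{n-1})_{n\ge1}$. Then there exists $A\in\mathbf B(\mathcal H)$ such that $s(A)\in\mathfrak i$ and $\mathrm h(M_{A,A})\notin\mathfrak i$, where $M_{A,A}:\mathbf B(\mathcal H)\to\mathbf B(\mathcal H)$, $X\mapsto AXA$.
   Context: $c_0$: complex null sequences; $\alpha^\star$: non-increasing rearrangement of $(|\alpha_n|)$. A Calkin space is a linear subspace $\mathfrak i\subseteq c_0$ such that $\alpha\in\mathfrak i,\beta\in c_0,\beta^\star\le\alpha^\star$ imply $\beta\in\mathfrak i$; the principal Calkin space generated by $\alpha$ is the smallest Calkin space containing $\alpha$. $s(A)$ is the singular number sequence of a compact operator $A$. Hilbert numbers of a bounded operator $T:\mathcal X\to\mathcal Y$: $\mathrm h_n(T)=\sup s_n(ATB)$ over all Hilbert spaces $\mathcal H',\mathcal K'$ and contractions $A\in\mathbf B(\mathcal Y,\mathcal H')$, $B\in\mathbf B(\mathcal K',\mathcal X)$. *)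

From Stdlib Require Import Reals Lra Psatz List.
From Coquelicot Require Import Coquelicot.
Open Scope R_scope.

Definition hilbert_axioms (V : Type) (zero : V) (add : V -> V -> V)
  (opp : V -> V) (scal : C -> V -> V) (inner : V -> V -> C) : Prop :=
  (forall x y z, add x (add y z) = add (add x y) z) /\
  (forall x y, add x y = add y x) /\
  (forall x, add zero x = x) /\
  (forall x, add x (opp x) = zero) /\
  (forall a b x, scal a (scal b x) = scal (Cmult a b) x) /\
  (forall x, scal (RtoC 1) x = x) /\
  (forall a x y, scal a (add x y) = add (scal a x) (scal a y)) /\
  (forall a b x, scal (Cplus a b) x = add (scal a x) (scal b x)) /\
  (forall x y z, inner (add x y) z = Cplus (inner x z) (inner y z)) /\
  (forall a x y, inner (scal a x) y = Cmult a (inner x y)) /\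
  (forall x y, inner y x = Cconj (inner x y)) /\
  (forall x, 0 <= Re (inner x x) /\ Im (inner x x) = 0) /\
  (forall x, inner x x = RtoC 0 -> x = zero) /\
  (forall u : nat -> V,
     (forall eps, 0 < eps -> exists N, forall m n, (N <= m)%nat -> (N <= n)%nat ->
        sqrt (Re (inner (add (u m) (opp (u n))) (add (u m) (opp (u n))))) < eps) ->
     exists l, is_lim_seq
       (fun n => sqrt (Re (inner (add (u n) (opp l)) (add (u n) (opp l))))) 0).

Record HSpace := {
  hcar :> Type;
  hzero : hcar;
  hadd : hcar -> hcar -> hcar;
  hopp : hcar -> hcar;
  hscal : C -> hcar -> hcar;
  hinner : hcar -> hcar -> C;
  hax : @hilbert_axioms hcar hzero hadd hopp hscal hinner
}.
Arguments hzero {h}.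
Arguments hadd {h}.
Arguments hopp {h}.
Arguments hscal {h}.
Arguments hinner {h}.

Definition hnorm {H : HSpace} (x : H) : R := sqrt (Re (hinner x x)).
Definition hsub {H : HSpace} (x y : H) : H := hadd x (hopp y).

Fixpoint lincomb {H : HSpace} (k : nat) (c : nat -> C) (v : nat -> H) : H :=
  match k with
  | O => hzero
  | S k' => hadd (lincomb k' c v) (hscal (c k') (v k'))
  end.

Definition separable (H : HSpace) : Prop :=
  exists d : nat -> H, forall (x : H) eps, 0 < eps -> exists n, hnorm (hsub x (d n)) < eps.

Definition infinite_dim (H : HSpace) : Prop :=
  forall (k : nat) (v : nat -> H), exists x : H, ~ exists c, x = lincomb k c v.

Definition is_linear {H1 H2 : HSpace} (f : H1 -> H2) : Prop :=
  (forall x y, f (hadd x y) = hadd (f x) (f y)) /\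
  (forall a x, f (hscal a x) = hscal a (f x)).

Definition is_bounded {H1 H2 : HSpace} (f : H1 -> H2) : Prop :=
  exists c, 0 <= c /\ forall x, hnorm (f x) <= c * hnorm x.

(** operator norm (used only for bounded maps, where it is finite) *)
Definition opnorm {H1 H2 : HSpace} (f : H1 -> H2) : R :=
  real (Lub_Rbar (fun r => exists x, hnorm x <= 1 /\ r = hnorm (f x))).

Definition BH (H : HSpace) : Type := { f : H -> H | is_linear f /\ is_bounded f }.

Lemma comp3_lb (H : HSpace) (A X : H -> H) :
  is_linear A /\ is_bounded A -> is_linear X /\ is_bounded X ->
  is_linear (fun h => A (X (A h))) /\ is_bounded (fun h => A (X (A h))).
Proof.
  intros [[LA1 LA2] [a [Ha BA]]] [[LX1 LX2] [b [Hb BX]]]; split.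
  - split; intros; [rewrite LA1, LX1, LA1 | rewrite LA2, LX2, LA2]; reflexivity.
  - exists (a * (b * a)); split.
    + apply Rmult_le_pos; [|apply Rmult_le_pos]; assumption.
    + intros h. eapply Rle_trans; [apply BA|].
      eapply Rle_trans; [apply Rmult_le_compat_l; [exact Ha| apply BX]|].
      pose proof (BA h) as E1. pose proof (Rmult_le_pos a b Ha Hb) as E2.
      pose proof (Rmult_le_compat_l (a*b) _ _ E2 E1) as E3.
      replace (a * (b * a) * hnorm h) with (a * b * (a * hnorm h)) by ring.
      rewrite <- Rmult_assoc. exact E3.
Qed.

Definition MAA {H : HSpace} (A : BH H) : BH H -> BH H :=
  fun X => exist _ (fun h => proj1_sig A (proj1_sig X (proj1_sig A h)))
                   (@comp3_lb H _ _ (proj2_sig A) (proj2_sig X)).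

Definition rank_le {H1 H2 : HSpace} (k : nat) (F : H1 -> H2) : Prop :=
  exists v : nat -> H2, forall x, exists c, F x = lincomb k c v.

(** singular numbers s_{k+1}(S) (0-based index k), i.e. approximation numbers
    inf { ||S - F|| : rank F < k+1 } *)
Definition snum {H1 H2 : HSpace} (S : H1 -> H2) (k : nat) : R :=
  real (Glb_Rbar (fun r => exists F : H1 -> H2,
     is_linear F /\ is_bounded F /\ rank_le k F /\ r = opnorm (fun x => hsub (S x) (F x)))).

(** Hilbert numbers h_{k+1}(T) of T : B(H) -> B(H) (0-based index k) *)
Definition hnum {H : HSpace} (T : BH H -> BH H) (k : nat) : R :=
  real (Lub_Rbar (fun r => exists (H' K' : HSpace) (A' : BH H -> H') (B' : K' -> BH H),
     (forall X Y Z : BH H, (forall h, proj1_sig Z h = hadd (proj1_sig X h) (proj1_sig Y h)) ->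
         A' Z = hadd (A' X) (A' Y)) /\
     (forall (a : C) (X Z : BH H), (forall h, proj1_sig Z h = hscal a (proj1_sig X h)) ->
         A' Z = hscal a (A' X)) /\
     (forall X : BH H, hnorm (A' X) <= opnorm (proj1_sig X)) /\
     (forall x y h, proj1_sig (B' (hadd x y)) h = hadd (proj1_sig (B' x) h) (proj1_sig (B' y) h)) /\
     (forall a x h, proj1_sig (B' (hscal a x)) h = hscal a (proj1_sig (B' x) h)) /\
     (forall x, opnorm (proj1_sig (B' x)) <= hnorm x) /\
     r = snum (fun x => A' (T (B' x))) k)).

Definition is_c0 (a : nat -> C) : Prop := is_lim_seq (fun n => Cmod (a n)) 0.

(** non-increasing rearrangement (0-based):
    a*_k = inf { sup_{j notin F} |a_j| : F finite, #F <= k } *)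
Definition dstar (a : nat -> C) (k : nat) : R :=
  real (Glb_Rbar (fun r => exists l : list nat, (length l <= k)%nat /\
     r = real (Lub_Rbar (fun s => exists j, ~ In j l /\ s = Cmod (a j))))).

Definition is_calkin (I : (nat -> C) -> Prop) : Prop :=
  (forall a, I a -> is_c0 a) /\
  I (fun _ => RtoC 0) /\
  (forall a b, I a -> I b -> I (fun n => Cplus (a n) (b n))) /\
  (forall (c : C) a, I a -> I (fun n => Cmult c (a n))) /\
  (forall a b, I a -> is_c0 b -> (forall n, dstar b n <= dstar a n) -> I b).

(** membership in the principal Calkin space generated by alpha
    (= intersection of all Calkin spaces containing alpha) *)
Definition in_principal (alpha b : nat -> C) : Prop :=
  forall I, is_calkin I -> I alpha -> I b.

(* Let [A] be diagonal, [A e_k = w ^ k e_k], for an orthonormal sequence [(e_k)].  Then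
   [s_n(A) <= w ^ n], so [s(A)] lies in every Calkin space containing [(w ^ n)].

   For [m >= 1], compress [M_{A,A}] between the contractions
   [x |-> (1/m^2) sum_q <x, e_q> e_(q mod m) (x) e_(q / m)] and
   [X |-> (1/m^2) sum_q <X e_(q / m), e_(q mod m)> e_q]  (sums over [q < m^2]):
   the result is diagonal on [(e_q)] with eigenvalues [>= (w^m / m^2)^2] for [q < m^2], hence
   [h_k(M_{A,A}) >= (w^m / m^2)^2] for all [k < m^2].  Such a sequence is not [O(r ^ k)] for
   any [r < 1], whereas the sequences whose non-increasing rearrangement is [O(r ^ n)] for some
   [r < 1] form a Calkin space containing [(w ^ n)]. *)

From Stdlib Require Import Reals Lra Lia Arith List Classical ClassicalEpsilon FunctionalExtensionality.
From Coquelicot Require Import Coquelicot.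
Open Scope R_scope.

Lemma real_Lub_le (E : R -> Prop) (M : R) :
  (forall x, E x -> x <= M) -> (exists x, E x) -> real (Lub_Rbar E) <= M.
Proof.
  intros HM [x0 Hx0].
  destruct (Lub_Rbar_correct E) as [Hub Hlub].
  assert (Rbar_le (Lub_Rbar E) M) by (apply Hlub; intros y Hy; apply HM, Hy).
  assert (Rbar_le x0 (Lub_Rbar E)) by (apply Hub, Hx0).
  destruct (Lub_Rbar E); simpl in *; try contradiction; lra.
Qed.

Lemma real_Lub_ge (E : R -> Prop) (M x : R) :
  (forall y, E y -> y <= M) -> E x -> x <= real (Lub_Rbar E).
Proof.
  intros HM Hx.
  destruct (Lub_Rbar_correct E) as [Hub Hlub].
  assert (Rbar_le (Lub_Rbar E) M) by (apply Hlub; intros y Hy; apply HM, Hy).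
  assert (Rbar_le x (Lub_Rbar E)) by (apply Hub, Hx).
  destruct (Lub_Rbar E); simpl in *; try contradiction; lra.
Qed.

(* Also covers the empty set, whose supremum is [m_infty] with [real m_infty = 0]. *)
Lemma real_Lub_ge0 (E : R -> Prop) :
  (forall x, E x -> 0 <= x) -> 0 <= real (Lub_Rbar E).
Proof.
  intros HE. destruct (Lub_Rbar_correct E) as [Hub Hlub].
  destruct (classic (exists x, E x)) as [[x0 Hx0] | Hempty].
  - assert (Rbar_le x0 (Lub_Rbar E)) by (apply Hub, Hx0).
    specialize (HE x0 Hx0). destruct (Lub_Rbar E); simpl in *; try contradiction; lra.
  - assert (Rbar_le (Lub_Rbar E) m_infty)
      by (apply Hlub; intros x Hx; exfalso; eauto).
    destruct (Lub_Rbar E); simpl in *; try contradiction; lra.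
Qed.

Lemma real_Glb_ge (E : R -> Prop) (m : R) :
  (forall x, E x -> m <= x) -> (exists x, E x) -> m <= real (Glb_Rbar E).
Proof.
  intros Hm [x0 Hx0].
  destruct (Glb_Rbar_correct E) as [Hlb Hglb].
  assert (Rbar_le m (Glb_Rbar E)) by (apply Hglb; intros y Hy; apply Hm, Hy).
  assert (Rbar_le (Glb_Rbar E) x0) by (apply Hlb, Hx0).
  destruct (Glb_Rbar E); simpl in *; try contradiction; lra.
Qed.

Lemma real_Glb_le (E : R -> Prop) (m x : R) :
  (forall y, E y -> m <= y) -> E x -> real (Glb_Rbar E) <= x.
Proof.
  intros Hm Hx.
  destruct (Glb_Rbar_correct E) as [Hlb Hglb].
  assert (Rbar_le m (Glb_Rbar E)) by (apply Hglb; intros y Hy; apply Hm, Hy).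
  assert (Rbar_le (Glb_Rbar E) x) by (apply Hlb, Hx).
  destruct (Glb_Rbar E); simpl in *; try contradiction; lra.
Qed.

Lemma real_Glb_approx (E : R -> Prop) (m eps : R) :
  (forall x, E x -> m <= x) -> (exists x, E x) -> 0 < eps ->
  exists x, E x /\ x < real (Glb_Rbar E) + eps.
Proof.
  intros Hm [x0 Hx0] Heps.
  destruct (Glb_Rbar_correct E) as [Hlb Hglb].
  assert (Rbar_le m (Glb_Rbar E)) by (apply Hglb; intros y Hy; apply Hm, Hy).
  assert (Rbar_le (Glb_Rbar E) x0) by (apply Hlb, Hx0).
  destruct (Glb_Rbar E) as [g| |]; simpl in *; try contradiction.
  apply NNPP; intros Hnone.
  assert (Rbar_le (g + eps) g); [|simpl in *; lra].
  apply Hglb; intros y Hy; simpl.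
  destruct (Rlt_le_dec y (g + eps)); [exfalso; eauto | auto].
Qed.

Section HilbertAlgebra.
Context {H : HSpace}.
Implicit Types x y z : H.

Lemma hadd_assoc x y z : hadd x (hadd y z) = hadd (hadd x y) z.
Proof. destruct (hax H) as (Ax&_); apply Ax. Qed.
Lemma hadd_comm x y : hadd x y = hadd y x.
Proof. destruct (hax H) as (_&Ax&_); apply Ax. Qed.
Lemma hadd_0l x : hadd hzero x = x.
Proof. destruct (hax H) as (_&_&Ax&_); apply Ax. Qed.
Lemma hadd_opp_r x : hadd x (hopp x) = hzero.
Proof. destruct (hax H) as (_&_&_&Ax&_); apply Ax. Qed.
Lemma hscal_assoc a b x : hscal a (hscal b x) = hscal (Cmult a b) x.
Proof. destruct (hax H) as (_&_&_&_&Ax&_); apply Ax. Qed.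
Lemma hscal_1 x : hscal (RtoC 1) x = x.
Proof. destruct (hax H) as (_&_&_&_&_&Ax&_); apply Ax. Qed.
Lemma hscal_hadd a x y : hscal a (hadd x y) = hadd (hscal a x) (hscal a y).
Proof. destruct (hax H) as (_&_&_&_&_&_&Ax&_); apply Ax. Qed.
Lemma hscal_Cplus a b x : hscal (Cplus a b) x = hadd (hscal a x) (hscal b x).
Proof. destruct (hax H) as (_&_&_&_&_&_&_&Ax&_); apply Ax. Qed.
Lemma hinner_hadd_l x y z : hinner (hadd x y) z = Cplus (hinner x z) (hinner y z).
Proof. destruct (hax H) as (_&_&_&_&_&_&_&_&Ax&_); apply Ax. Qed.
Lemma hinner_hscal_l a x y : hinner (hscal a x) y = Cmult a (hinner x y).
Proof. destruct (hax H) as (_&_&_&_&_&_&_&_&_&Ax&_); apply Ax. Qed.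
Lemma hinner_conj x y : hinner y x = Cconj (hinner x y).
Proof. destruct (hax H) as (_&_&_&_&_&_&_&_&_&_&Ax&_); apply Ax. Qed.
Lemma hinner_self_pos x : 0 <= Re (hinner x x) /\ Im (hinner x x) = 0.
Proof. destruct (hax H) as (_&_&_&_&_&_&_&_&_&_&_&Ax&_); apply Ax. Qed.
Lemma hinner_self_eq0 x : hinner x x = RtoC 0 -> x = hzero.
Proof. destruct (hax H) as (_&_&_&_&_&_&_&_&_&_&_&_&Ax&_); apply Ax. Qed.
Lemma hcomplete (u : nat -> H) :
  (forall eps, 0 < eps -> exists N, forall m n, (N <= m)%nat -> (N <= n)%nat ->
     hnorm (hsub (u m) (u n)) < eps) ->
  exists l, is_lim_seq (fun n => hnorm (hsub (u n) l)) 0.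
Proof. destruct (hax H) as (_&_&_&_&_&_&_&_&_&_&_&_&_&Ax); apply Ax. Qed.

Lemma hadd_0r x : hadd x hzero = x.
Proof. rewrite hadd_comm; apply hadd_0l. Qed.

Lemma hadd_cancel_l x y z : hadd x y = hadd x z -> y = z.
Proof.
  intros E. rewrite <- (hadd_0l y), <- (hadd_0l z), <- (hadd_opp_r x), (hadd_comm x).
  rewrite <- !hadd_assoc, E. reflexivity.
Qed.

Lemma hadd_eq_l x y : hadd x y = x -> y = hzero.
Proof. intros E. apply (hadd_cancel_l x). rewrite hadd_0r. exact E. Qed.

Lemma hadd_swap_mid x y z (t : H) :
  hadd (hadd x y) (hadd z t) = hadd (hadd x z) (hadd y t).
Proof. rewrite <- !hadd_assoc. f_equal. rewrite !hadd_assoc. f_equal. apply hadd_comm. Qed.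

Lemma hscal_0l x : hscal (RtoC 0) x = hzero.
Proof.
  apply (hadd_eq_l (hscal (RtoC 0) x)). rewrite <- hscal_Cplus.
  f_equal. apply injective_projections; simpl; ring.
Qed.

Lemma hscal_0r a : hscal a (@hzero H) = hzero.
Proof. apply (hadd_eq_l (hscal a hzero)). rewrite <- hscal_hadd, hadd_0r. reflexivity. Qed.

Lemma hopp_hscal x : hopp x = hscal (RtoC (-1)) x.
Proof.
  apply (hadd_cancel_l x). rewrite hadd_opp_r.
  rewrite <- (hscal_1 x) at 1. rewrite <- hscal_Cplus, <- (hscal_0l x).
  f_equal. apply injective_projections; simpl; ring.
Qed.

Lemma hopp_hadd x y : hopp (hadd x y) = hadd (hopp x) (hopp y).
Proof. rewrite !hopp_hscal. apply hscal_hadd. Qed.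

Lemma hinner_0l y : hinner hzero y = RtoC 0.
Proof. rewrite <- (hscal_0l hzero), hinner_hscal_l. apply injective_projections; simpl; ring. Qed.

Lemma hinner_0r y : hinner y hzero = RtoC 0.
Proof. rewrite hinner_conj, hinner_0l. apply injective_projections; simpl; ring. Qed.

Lemma hinner_hadd_r x y z : hinner x (hadd y z) = Cplus (hinner x y) (hinner x z).
Proof. rewrite hinner_conj, hinner_hadd_l, Cplus_conj, <- !hinner_conj. reflexivity. Qed.

Lemma hinner_hscal_r a x y : hinner x (hscal a y) = Cmult (Cconj a) (hinner x y).
Proof. rewrite hinner_conj, hinner_hscal_l, Cmult_conj, <- hinner_conj. reflexivity. Qed.

Lemma hinner_hopp_l x y : hinner (hopp x) y = Copp (hinner x y).
Proof. rewrite hopp_hscal, hinner_hscal_l. apply injective_projections; simpl; ring. Qed.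

Lemma hinner_hsub_l x y z : hinner (hsub x y) z = Cminus (hinner x z) (hinner y z).
Proof. unfold hsub. rewrite hinner_hadd_l, hinner_hopp_l. reflexivity. Qed.

Lemma hsub_diag x : hsub x x = hzero.
Proof. apply hadd_opp_r. Qed.

Lemma hsub_0r x : hsub x hzero = x.
Proof. unfold hsub. rewrite hopp_hscal, hscal_0r, hadd_0r. reflexivity. Qed.

Lemma hsub_hadd x y z (t : H) : hsub (hadd x y) (hadd z t) = hadd (hsub x z) (hsub y t).
Proof. unfold hsub. rewrite hopp_hadd. apply hadd_swap_mid. Qed.

Lemma hsub_hscal a x y : hsub (hscal a x) (hscal a y) = hscal a (hsub x y).
Proof.
  unfold hsub. rewrite hscal_hadd, !hopp_hscal, !hscal_assoc, Cmult_comm. reflexivity.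
Qed.

Lemma hsub_add_cancel x y z : hadd (hsub x y) (hsub y z) = hsub x z.
Proof.
  unfold hsub. rewrite <- hadd_assoc. f_equal.
  rewrite hadd_assoc, (hadd_comm (hopp y) y), hadd_opp_r, hadd_0l. reflexivity.
Qed.

Definition hnorm2 x : R := Re (hinner x x).

Lemma hnorm2_ge0 x : 0 <= hnorm2 x.
Proof. apply hinner_self_pos. Qed.

Lemma hinner_self x : hinner x x = RtoC (hnorm2 x).
Proof.
  destruct (hinner_self_pos x) as [_ Him].
  apply injective_projections; simpl; auto.
Qed.

Lemma hnorm_ge0 x : 0 <= hnorm x.
Proof. apply sqrt_pos. Qed.

Lemma hnorm_sqr x : hnorm x * hnorm x = hnorm2 x.
Proof. apply sqrt_sqrt, hnorm2_ge0. Qed.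

Lemma hnorm_le_sqr x (c : R) : 0 <= c -> hnorm2 x <= c * c -> hnorm x <= c.
Proof.
  intros Hc Hx. apply Rsqr_incr_0_var; [unfold Rsqr; rewrite hnorm_sqr; exact Hx | exact Hc].
Qed.

Lemma hnorm_eq0 x : hnorm x = 0 -> x = hzero.
Proof.
  intros E. apply hinner_self_eq0. rewrite hinner_self, <- hnorm_sqr, E.
  f_equal. ring.
Qed.

Lemma hnorm_0 : hnorm (@hzero H) = 0.
Proof. unfold hnorm. rewrite hinner_0l. apply sqrt_0. Qed.

Lemma hnorm2_hadd x y : hnorm2 (hadd x y) = hnorm2 x + hnorm2 y + 2 * Re (hinner x y).
Proof.
  unfold hnorm2. rewrite hinner_hadd_l, !hinner_hadd_r, (hinner_conj x y).
  unfold Cconj, Re; simpl; ring.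
Qed.

Lemma hnorm2_hscal a x : hnorm2 (hscal a x) = (Cmod a)^2 * hnorm2 x.
Proof.
  unfold hnorm2 at 1. rewrite hinner_hscal_l, hinner_hscal_r, hinner_self, Cmod2_alt.
  destruct a; simpl; ring.
Qed.

Lemma hnorm_hscal a x : hnorm (hscal a x) = Cmod a * hnorm x.
Proof.
  unfold hnorm. fold (hnorm2 (hscal a x)) (hnorm2 x).
  rewrite hnorm2_hscal, sqrt_mult, sqrt_pow2;
    auto using Cmod_ge_0, pow2_ge_0, hnorm2_ge0.
Qed.

Lemma hnorm_hopp x : hnorm (hopp x) = hnorm x.
Proof.
  rewrite hopp_hscal, hnorm_hscal, Cmod_R, Rabs_left by lra. ring.
Qed.

Lemma hnorm2_hsub x y : hnorm2 (hsub x y) = hnorm2 x + hnorm2 y - 2 * Re (hinner x y).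
Proof.
  unfold hsub. rewrite hnorm2_hadd, hopp_hscal, hnorm2_hscal, Cmod_R, hinner_hscal_r.
  rewrite Rabs_left by lra. unfold Re; simpl; ring.
Qed.

(* The discriminant of [t |-> hnorm2 (x + t y) >= 0]. *)
Lemma Re_hinner_sqr_le x y : (Re (hinner x y))^2 <= hnorm2 x * hnorm2 y.
Proof.
  assert (Q : forall t : R, 0 <= hnorm2 x + 2 * t * Re (hinner x y) + t^2 * hnorm2 y).
  { intros t. pose proof (hnorm2_ge0 (hadd x (hscal (RtoC t) y))) as P.
    rewrite hnorm2_hadd, hnorm2_hscal, Cmod_R, pow2_abs, hinner_hscal_r in P.
    replace (Re (Cmult (Cconj (RtoC t)) (hinner x y))) with (t * Re (hinner x y)) in P
      by (unfold Cconj, Re; simpl; ring).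
    lra. }
  set (b := Re (hinner x y)) in *. set (a := hnorm2 x) in *. set (c := hnorm2 y) in *.
  assert (Ha : 0 <= a) by apply hnorm2_ge0. assert (Hc : 0 <= c) by apply hnorm2_ge0.
  destruct (Rle_lt_or_eq_dec 0 c Hc) as [Hc' | <-].
  - pose proof (Q (- b / c)) as Qc.
    replace (a + 2 * (- b / c) * b + (- b / c) ^ 2 * c) with ((a * c - b ^ 2) / c) in Qc
      by (field; lra).
    apply Rmult_le_compat_r with (r := c) in Qc; [|lra].
    unfold Rdiv in Qc. rewrite Rmult_assoc, Rinv_l, Rmult_0_l in Qc by lra. lra.
  - destruct (Req_dec b 0) as [-> | Hb]; [lra|].
    pose proof (Q (- (a + 1) / (2 * b))) as Qb.
    replace (a + 2 * (- (a + 1) / (2 * b)) * b + (- (a + 1) / (2 * b)) ^ 2 * 0) with (-1) in Qb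
      by (field; auto). lra.
Qed.

Lemma Rabs_Re_hinner_le x y : Rabs (Re (hinner x y)) <= hnorm x * hnorm y.
Proof.
  rewrite <- sqrt_Rsqr_abs. unfold hnorm. fold (hnorm2 x) (hnorm2 y).
  rewrite <- sqrt_mult by apply hnorm2_ge0. apply sqrt_le_1_alt.
  rewrite Rsqr_pow2. apply Re_hinner_sqr_le.
Qed.

Lemma hnorm_triangle x y : hnorm (hadd x y) <= hnorm x + hnorm y.
Proof.
  pose proof (hnorm_ge0 x); pose proof (hnorm_ge0 y).
  apply hnorm_le_sqr; [lra|].
  rewrite hnorm2_hadd, <- !hnorm_sqr.
  pose proof (Rabs_Re_hinner_le x y). pose proof (Rle_abs (Re (hinner x y))). nra.
Qed.

Lemma hnorm_hsub_sym x y : hnorm (hsub x y) = hnorm (hsub y x).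
Proof.
  unfold hnorm. fold (hnorm2 (hsub x y)) (hnorm2 (hsub y x)).
  rewrite !hnorm2_hsub, (hinner_conj x y). unfold Re, Cconj; simpl. f_equal. ring.
Qed.

Lemma hnorm_hsub_triangle x y z : hnorm (hsub x z) <= hnorm (hsub x y) + hnorm (hsub y z).
Proof. rewrite <- (hsub_add_cancel x y z). apply hnorm_triangle. Qed.

Lemma hnorm_hsub_le x y : hnorm (hsub x y) <= hnorm x + hnorm y.
Proof. unfold hsub. rewrite <- (hnorm_hopp y). apply hnorm_triangle. Qed.

Lemma hnorm_hsub_eq0 x y : hnorm (hsub x y) = 0 -> x = y.
Proof.
  intros E. apply hnorm_eq0 in E. apply (hadd_cancel_l (hopp y)).
  rewrite (hadd_comm (hopp y) y), hadd_opp_r, hadd_comm. exact E.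
Qed.

End HilbertAlgebra.

Fixpoint csum (n : nat) (f : nat -> C) : C :=
  match n with O => RtoC 0 | S n' => Cplus (csum n' f) (f n') end.

Fixpoint rsum (n : nat) (f : nat -> R) : R :=
  match n with O => 0 | S n' => rsum n' f + f n' end.

Lemma csum_S n f : csum (S n) f = Cplus (csum n f) (f n).
Proof. reflexivity. Qed.

Lemma csum_ext n f g : (forall k, (k < n)%nat -> f k = g k) -> csum n f = csum n g.
Proof. induction n; simpl; intros E; auto. rewrite IHn, E by auto. reflexivity. Qed.

Lemma rsum_ext n f g : (forall k, (k < n)%nat -> f k = g k) -> rsum n f = rsum n g.
Proof. induction n; simpl; intros E; auto. rewrite IHn, E by auto. reflexivity. Qed.

Lemma rsum_le n f g : (forall k, (k < n)%nat -> f k <= g k) -> rsum n f <= rsum n g.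
Proof.
  induction n; simpl; intros E; [lra|].
  pose proof (IHn (fun k Hk => E k (Nat.lt_lt_succ_r _ _ Hk))). pose proof (E n (Nat.lt_succ_diag_r n)). lra.
Qed.

Lemma rsum_const n a : rsum n (fun _ => a) = INR n * a.
Proof. induction n; simpl rsum; [simpl; ring|]. rewrite IHn, S_INR. ring. Qed.

Lemma rsum_le_const n f a : (forall k, (k < n)%nat -> f k <= a) -> rsum n f <= INR n * a.
Proof. intros. rewrite <- rsum_const. apply rsum_le; auto. Qed.

Lemma rsum_ge0 n f : (forall k, (k < n)%nat -> 0 <= f k) -> 0 <= rsum n f.
Proof.
  intros Hf. apply Rle_trans with (rsum n (fun _ => 0)).
  - rewrite rsum_const. lra.
  - apply rsum_le, Hf.
Qed.

Lemma rsum_ge_term n f j : (forall q, (q < n)%nat -> 0 <= f q) -> (j < n)%nat -> f j <= rsum n f.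
Proof.
  induction n; intros Hf Hj; [lia|]. simpl.
  destruct (Nat.eq_dec j n) as [-> | Hjn].
  - pose proof (rsum_ge0 n f (fun q Hq => Hf q ltac:(lia))). lra.
  - pose proof (IHn (fun q Hq => Hf q ltac:(lia)) ltac:(lia)). pose proof (Hf n ltac:(lia)). lra.
Qed.

Lemma rsum_scal n a f : rsum n (fun k => a * f k) = a * rsum n f.
Proof. induction n; simpl; [ring|]. rewrite IHn; ring. Qed.

Lemma rsum_tail_zero n K f : (K <= n)%nat -> (forall q, (K <= q)%nat -> f q = 0) -> rsum n f = rsum K f.
Proof.
  induction n; intros HK Hf.
  - replace K with 0%nat by lia. reflexivity.
  - destruct (Nat.eq_dec K (S n)) as [-> | HKn]; auto.
    simpl. rewrite (Hf n), IHn by (try exact Hf; lia). ring.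
Qed.

Lemma Re_csum n f : Re (csum n f) = rsum n (fun k => Re (f k)).
Proof. induction n; simpl; auto. rewrite <- IHn. reflexivity. Qed.

Lemma csum_Cplus n f g : csum n (fun k => Cplus (f k) (g k)) = Cplus (csum n f) (csum n g).
Proof. induction n; simpl; [apply injective_projections; simpl; ring|]. rewrite IHn. ring. Qed.

Lemma csum_Cmult_l n a f : csum n (fun k => Cmult a (f k)) = Cmult a (csum n f).
Proof. induction n; simpl; [apply injective_projections; simpl; ring|]. rewrite IHn. ring. Qed.

Lemma csum_zero n : csum n (fun _ => RtoC 0) = RtoC 0.
Proof. induction n; simpl; auto. rewrite IHn. apply injective_projections; simpl; ring. Qed.

Lemma csum_kronecker n (c : nat -> C) j :
  csum n (fun k => Cmult (c k) (if Nat.eqb k j then RtoC 1 else RtoC 0)) =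
  if Nat.ltb j n then c j else RtoC 0.
Proof.
  induction n; simpl; auto. rewrite IHn.
  destruct (Nat.eqb_spec n j) as [-> | Hnj].
  - rewrite (proj2 (Nat.ltb_ge j j)), (proj2 (Nat.ltb_lt j (S j))) by lia.
    apply injective_projections; simpl; ring.
  - destruct (Nat.ltb_spec j n), (Nat.ltb_spec j (S n)); try lia;
      apply injective_projections; simpl; ring.
Qed.

Section LinearCombinations.
Context {H : HSpace}.
Implicit Types (v : nat -> H) (c d : nat -> C).

Lemma lincomb_ext n c d v : (forall k, (k < n)%nat -> c k = d k) -> lincomb n c v = lincomb n d v.
Proof. induction n; simpl; intros E; auto. rewrite IHn, E by auto. reflexivity. Qed.

Lemma lincomb_ext_vec n c v u : (forall k, (k < n)%nat -> v k = u k) -> lincomb n c v = lincomb n c u.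
Proof. induction n; simpl; intros E; auto. rewrite IHn, E by auto. reflexivity. Qed.

Lemma lincomb_zero n v : lincomb n (fun _ => RtoC 0) v = hzero.
Proof. induction n; simpl; auto. rewrite IHn, hscal_0l, hadd_0l. reflexivity. Qed.

Lemma lincomb_hadd n c d v :
  hadd (lincomb n c v) (lincomb n d v) = lincomb n (fun k => Cplus (c k) (d k)) v.
Proof. induction n; simpl; [apply hadd_0l|]. rewrite hadd_swap_mid, IHn, hscal_Cplus. reflexivity. Qed.

Lemma lincomb_hscal n a c v : hscal a (lincomb n c v) = lincomb n (fun k => Cmult a (c k)) v.
Proof. induction n; simpl; [apply hscal_0r|]. rewrite hscal_hadd, IHn, hscal_assoc. reflexivity. Qed.

Lemma lincomb_hsub n c d v :
  hsub (lincomb n c v) (lincomb n d v) = lincomb n (fun k => Cminus (c k) (d k)) v.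
Proof.
  unfold hsub. rewrite hopp_hscal, lincomb_hscal, lincomb_hadd.
  apply lincomb_ext; intros. apply injective_projections; simpl; ring.
Qed.

Lemma lincomb_single n a j v : (j < n)%nat ->
  lincomb n (fun k => if Nat.eqb k j then a else RtoC 0) v = hscal a (v j).
Proof.
  induction n; intros Hj; [lia|]. simpl.
  destruct (Nat.eqb_spec n j) as [-> | Hnj].
  - rewrite (lincomb_ext j _ (fun _ => RtoC 0)), lincomb_zero, hadd_0l; auto.
    intros k Hk. destruct (Nat.eqb_spec k j); [lia | reflexivity].
  - rewrite IHn, hscal_0l, hadd_0r by lia. reflexivity.
Qed.

Lemma lincomb_pad n m c v : (n <= m)%nat ->
  lincomb n c v = lincomb m (fun k => if Nat.ltb k n then c k else RtoC 0) v.
Proof.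
  induction m; intros Hnm.
  - replace n with 0%nat by lia. reflexivity.
  - destruct (Nat.eq_dec n (S m)) as [-> | Hn].
    + apply lincomb_ext. intros k Hk. destruct (Nat.ltb_spec k (S m)); [reflexivity | lia].
    + simpl. rewrite <- IHm by lia. destruct (Nat.ltb_spec m n); [lia|].
      rewrite hscal_0l, hadd_0r. reflexivity.
Qed.

Lemma lincomb_nested n a (c : nat -> nat -> C) k v :
  lincomb n a (fun q => lincomb k (c q) v) =
  lincomb k (fun i => csum n (fun q => Cmult (a q) (c q i))) v.
Proof.
  induction n; simpl.
  - symmetry. apply lincomb_zero.
  - rewrite IHn, lincomb_hscal, lincomb_hadd. reflexivity.
Qed.

Lemma hinner_lincomb_l n c v y :
  hinner (lincomb n c v) y = csum n (fun k => Cmult (c k) (hinner (v k) y)).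
Proof. induction n; simpl; [apply hinner_0l|]. rewrite hinner_hadd_l, IHn, hinner_hscal_l. reflexivity. Qed.

Lemma hinner_lincomb_r n c v y :
  hinner y (lincomb n c v) = csum n (fun k => Cmult (Cconj (c k)) (hinner y (v k))).
Proof. induction n; simpl; [apply hinner_0r|]. rewrite hinner_hadd_r, IHn, hinner_hscal_r. reflexivity. Qed.

Lemma hnorm_lincomb_le n c v :
  hnorm (lincomb n c v) <= rsum n (fun k => Cmod (c k) * hnorm (v k)).
Proof.
  induction n; simpl; [rewrite hnorm_0; lra|].
  eapply Rle_trans; [apply hnorm_triangle|]. rewrite hnorm_hscal. lra.
Qed.

End LinearCombinations.

Lemma lincomb_linear {H1 H2 : HSpace} (F : H1 -> H2) n c (v : nat -> H1) :
  is_linear F -> F (lincomb n c v) = lincomb n c (fun k => F (v k)).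
Proof.
  intros [Fadd Fscal]. induction n; simpl.
  - rewrite <- (hscal_0l hzero), Fscal, hscal_0l. reflexivity.
  - rewrite Fadd, Fscal, IHn. reflexivity.
Qed.

Definition orthonormal_upto {H : HSpace} (n : nat) (v : nat -> H) : Prop :=
  forall i j, (i < n)%nat -> (j < n)%nat ->
    hinner (v i) (v j) = if Nat.eqb i j then RtoC 1 else RtoC 0.

Definition orthonormal {H : HSpace} (v : nat -> H) : Prop :=
  forall i j, hinner (v i) (v j) = if Nat.eqb i j then RtoC 1 else RtoC 0.

Lemma Re_Cmult_Cconj (c : C) : Re (Cmult c (Cconj c)) = (Cmod c)^2.
Proof. rewrite Cmod2_alt. destruct c; unfold Cconj, Re, Im; simpl. ring. Qed.

Section Orthonormal.
Context {H : HSpace} (e : nat -> H).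

Lemma hinner_lincomb_upto n c j : orthonormal_upto n e -> (j < n)%nat ->
  hinner (lincomb n c e) (e j) = c j.
Proof.
  intros He Hj. rewrite hinner_lincomb_l.
  rewrite (csum_ext _ _ (fun k => Cmult (c k) (if Nat.eqb k j then RtoC 1 else RtoC 0))).
  - rewrite csum_kronecker. destruct (Nat.ltb_spec j n); [reflexivity | lia].
  - intros k Hk. rewrite He; auto.
Qed.

Hypothesis He : orthonormal e.

Lemma hnorm_orthonormal q : hnorm (e q) = 1.
Proof. unfold hnorm. rewrite He, Nat.eqb_refl. apply sqrt_1. Qed.

Lemma hinner_lincomb_basis n c j :
  hinner (lincomb n c e) (e j) = if Nat.ltb j n then c j else RtoC 0.
Proof.
  rewrite hinner_lincomb_l, <- csum_kronecker.
  apply csum_ext; intros. rewrite He. reflexivity.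
Qed.

Lemma hnorm2_lincomb n c : hnorm2 (lincomb n c e) = rsum n (fun k => (Cmod (c k))^2).
Proof.
  unfold hnorm2. rewrite hinner_lincomb_l, Re_csum. apply rsum_ext. intros k Hk.
  rewrite hinner_conj, hinner_lincomb_basis. destruct (Nat.ltb_spec k n); [|lia].
  apply Re_Cmult_Cconj.
Qed.

Lemma hnorm2_sub_projection n x :
  hnorm2 (hsub x (lincomb n (fun k => hinner x (e k)) e)) =
  hnorm2 x - rsum n (fun k => (Cmod (hinner x (e k)))^2).
Proof.
  rewrite hnorm2_hsub, hnorm2_lincomb, hinner_lincomb_r, Re_csum.
  rewrite (rsum_ext n (fun k => Re (Cmult (Cconj (hinner x (e k))) (hinner x (e k))))
             (fun k => (Cmod (hinner x (e k)))^2)); [ring|].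
  intros k _. rewrite Cmult_comm. apply Re_Cmult_Cconj.
Qed.

Lemma bessel n x : rsum n (fun k => (Cmod (hinner x (e k)))^2) <= hnorm2 x.
Proof.
  pose proof (hnorm2_ge0 (hsub x (lincomb n (fun k => hinner x (e k)) e))).
  rewrite hnorm2_sub_projection in *. lra.
Qed.

Lemma Cmod_hinner_le x k : Cmod (hinner x (e k)) <= hnorm x.
Proof.
  pose proof (bessel (S k) x) as Hb. cbn [rsum] in Hb.
  pose proof (rsum_ge0 k (fun k => (Cmod (hinner x (e k)))^2) (fun _ _ => pow2_ge_0 _)).
  apply Rsqr_incr_0_var; [|apply hnorm_ge0].
  unfold Rsqr. rewrite hnorm_sqr. nra.
Qed.

End Orthonormal.

Section GramSchmidt.
Context {H : HSpace} (Hinf : infinite_dim H).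

Definition gram_schmidt_next (n : nat) (f : nat -> H) : H :=
  let x := proj1_sig (constructive_indefinite_description _ (Hinf n f)) in
  let y := hsub x (lincomb n (fun k => hinner x (f k)) f) in
  hscal (RtoC (/ hnorm y)) y.

Lemma gram_schmidt_next_spec n f : orthonormal_upto n f ->
  hinner (gram_schmidt_next n f) (gram_schmidt_next n f) = RtoC 1 /\
  forall j, (j < n)%nat -> hinner (gram_schmidt_next n f) (f j) = RtoC 0.
Proof.
  intros Hf. unfold gram_schmidt_next.
  destruct (constructive_indefinite_description _ (Hinf n f)) as [x Hx]; simpl.
  set (y := hsub x (lincomb n (fun k => hinner x (f k)) f)).
  assert (Hy : 0 < hnorm y).
  { destruct (Rle_lt_or_eq_dec _ _ (hnorm_ge0 y)) as [Hpos | E]; auto.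
    symmetry in E. apply hnorm_hsub_eq0 in E. exfalso. eauto. }
  split.
  - rewrite hinner_self. f_equal.
    rewrite hnorm2_hscal, Cmod_R, <- hnorm_sqr, Rabs_right by (left; apply Rinv_0_lt_compat, Hy).
    field. lra.
  - intros j Hj. unfold y.
    rewrite hinner_hscal_l, hinner_hsub_l, hinner_lincomb_upto by auto.
    apply injective_projections; simpl; ring.
Qed.

Fixpoint gram_schmidt (n : nat) : nat -> H :=
  match n with
  | O => fun _ => hzero
  | S n' => fun k => if Nat.ltb k n' then gram_schmidt n' k
                    else gram_schmidt_next n' (gram_schmidt n')
  end.

Lemma gram_schmidt_orthonormal n : orthonormal_upto n (gram_schmidt n).
Proof.
  induction n; intros i j Hi Hj; [lia|]. simpl.
  destruct (gram_schmidt_next_spec n _ IHn) as [Hnorm Horth].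
  destruct (Nat.ltb_spec i n), (Nat.ltb_spec j n).
  - apply IHn; auto.
  - rewrite hinner_conj, Horth by auto. destruct (Nat.eqb_spec i j); [lia|].
    apply injective_projections; simpl; ring.
  - rewrite Horth by auto. destruct (Nat.eqb_spec i j); [lia | reflexivity].
  - replace j with i by lia. rewrite Nat.eqb_refl. exact Hnorm.
Qed.

Lemma gram_schmidt_stable n k : (k < n)%nat -> gram_schmidt n k = gram_schmidt (S k) k.
Proof.
  induction n; intros Hk; [lia|].
  destruct (Nat.eq_dec k n) as [-> | Hkn]; auto.
  simpl. destruct (Nat.ltb_spec k n); [apply IHn | ]; lia.
Qed.

End GramSchmidt.

Lemma infinite_dim_orthonormal (H : HSpace) :
  infinite_dim H -> exists e : nat -> H, orthonormal e.
Proof.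
  intros Hinf. exists (fun k => gram_schmidt Hinf (S k) k). intros i j.
  rewrite <- (gram_schmidt_stable Hinf (S (i + j)) i), <- (gram_schmidt_stable Hinf (S (i + j)) j)
    by lia.
  apply gram_schmidt_orthonormal; lia.
Qed.

Lemma le_of_lim0_bound (a : nat -> R) (B c : R) N :
  is_lim_seq a 0 -> (forall n, (N <= n)%nat -> c <= a n + B) -> c <= B.
Proof.
  intros La Hb. apply (is_lim_seq_incr_n a N) in La.
  pose proof (is_lim_seq_plus' _ _ _ B La (is_lim_seq_const B)) as Lb.
  pose proof (is_lim_seq_le (fun _ => c) _ c _ (fun n => Hb (n + N)%nat ltac:(lia))
                (is_lim_seq_const c) Lb) as Hc.
  simpl in Hc. lra.
Qed.

Lemma is_lim_seq_plus0 (u v : nat -> R) :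
  is_lim_seq u 0 -> is_lim_seq v 0 -> is_lim_seq (fun n => u n + v n) 0.
Proof.
  intros Lu Lv. replace (Finite 0) with (Finite (0 + 0)) by (f_equal; ring).
  apply is_lim_seq_plus'; auto.
Qed.

Section HLimits.
Context {H : HSpace}.

Definition hlim (u : nat -> H) (l : H) : Prop :=
  is_lim_seq (fun n => hnorm (hsub (u n) l)) 0.

Lemma hlim_dist_le (u : nat -> H) l z B N :
  hlim u l -> (forall n, (N <= n)%nat -> hnorm (hsub (u n) z) <= B) -> hnorm (hsub l z) <= B.
Proof.
  intros Lu Hb. apply (le_of_lim0_bound _ B _ N Lu). intros n Hn.
  pose proof (hnorm_hsub_triangle l (u n) z). rewrite (hnorm_hsub_sym l (u n)) in *.
  specialize (Hb n Hn). lra.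
Qed.

Lemma hlim_unique (u : nat -> H) l l' : hlim u l -> hlim u l' -> l = l'.
Proof.
  intros L1 L2. apply hnorm_hsub_eq0, Rle_antisym; [|apply hnorm_ge0].
  apply (le_of_lim0_bound _ 0 _ 0%nat (is_lim_seq_plus0 _ _ L1 L2)). intros n _.
  pose proof (hnorm_hsub_triangle l (u n) l'). rewrite (hnorm_hsub_sym l (u n)) in *. lra.
Qed.

Lemma hlim_eventually_const (u : nat -> H) c N :
  (forall n, (N <= n)%nat -> u n = c) -> hlim u c.
Proof.
  intros E. apply (is_lim_seq_incr_n _ N).
  apply is_lim_seq_ext with (fun _ => 0); [|apply is_lim_seq_const].
  intros n. rewrite E, hsub_diag, hnorm_0 by lia. reflexivity.
Qed.

Lemma hlim_ext (u v : nat -> H) l : (forall n, u n = v n) -> hlim u l -> hlim v l.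
Proof.
  intros E L. apply is_lim_seq_ext with (fun n => hnorm (hsub (u n) l)); auto.
  intros n. rewrite E. reflexivity.
Qed.

Lemma hlim_hadd (u v : nat -> H) l l' :
  hlim u l -> hlim v l' -> hlim (fun n => hadd (u n) (v n)) (hadd l l').
Proof.
  intros Lu Lv.
  apply is_lim_seq_le_le with (fun _ => 0) (fun n => hnorm (hsub (u n) l) + hnorm (hsub (v n) l')).
  - intros n. rewrite hsub_hadd. split; [apply hnorm_ge0 | apply hnorm_triangle].
  - apply is_lim_seq_const.
  - apply is_lim_seq_plus0; auto.
Qed.

Lemma hlim_hscal (u : nat -> H) l a : hlim u l -> hlim (fun n => hscal a (u n)) (hscal a l).
Proof.
  intros Lu. apply is_lim_seq_ext with (fun n => Cmod a * hnorm (hsub (u n) l)).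
  - intros n. rewrite hsub_hscal, hnorm_hscal. reflexivity.
  - replace (Finite 0) with (Rbar_mult (Cmod a) 0) by (simpl; f_equal; ring).
    apply is_lim_seq_scal_l, Lu.
Qed.

End HLimits.

Section OperatorNorm.
Context {H1 H2 : HSpace}.
Implicit Types (f g : H1 -> H2).

Lemma opnorm_ge0 f : 0 <= opnorm f.
Proof. apply real_Lub_ge0. intros r [x [_ ->]]. apply hnorm_ge0. Qed.

Lemma opnorm_le f M : (forall x, hnorm x <= 1 -> hnorm (f x) <= M) -> opnorm f <= M.
Proof.
  intros HM. apply real_Lub_le.
  - intros r [x [Hx ->]]. auto.
  - exists (hnorm (f hzero)), hzero. rewrite hnorm_0. split; [lra | reflexivity].
Qed.

Lemma is_linear_0 f : is_linear f -> f hzero = hzero.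
Proof. intros [_ Fscal]. rewrite <- (hscal_0l hzero), Fscal, hscal_0l. reflexivity. Qed.

Lemma hnorm_le_opnorm f x : is_linear f -> is_bounded f -> hnorm (f x) <= opnorm f * hnorm x.
Proof.
  intros Hlin [c [Hc Hf]].
  assert (Hunit : forall y, hnorm y <= 1 -> hnorm (f y) <= opnorm f).
  { intros y Hy. apply (real_Lub_ge _ c); [|eauto].
    intros r [z [Hz ->]]. pose proof (Hf z). pose proof (hnorm_ge0 z). nra. }
  destruct (Rle_lt_or_eq_dec _ _ (hnorm_ge0 x)) as [Hx | Hx].
  - set (t := / hnorm x).
    assert (Ht : 0 < t) by (apply Rinv_0_lt_compat, Hx).
    pose proof (Hunit (hscal (RtoC t) x)) as Hux.
    rewrite (proj2 Hlin), !hnorm_hscal, Cmod_R, Rabs_right in Hux by lra.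
    assert (Hxt : t * hnorm x = 1) by (unfold t; field; lra).
    specialize (Hux ltac:(lra)).
    apply (Rmult_le_reg_l t); [exact Ht|].
    replace (t * (opnorm f * hnorm x)) with (opnorm f * (t * hnorm x)) by ring.
    rewrite Hxt, Rmult_1_r. exact Hux.
  - symmetry in Hx. apply hnorm_eq0 in Hx. subst x.
    rewrite is_linear_0, !hnorm_0 by exact Hlin. lra.
Qed.

Lemma is_linear_hsub f g : is_linear f -> is_linear g -> is_linear (fun x => hsub (f x) (g x)).
Proof.
  intros [Fadd Fscal] [Gadd Gscal]. split; intros.
  - rewrite Fadd, Gadd. apply hsub_hadd.
  - rewrite Fscal, Gscal. apply hsub_hscal.
Qed.

Lemma is_bounded_hsub f g : is_bounded f -> is_bounded g -> is_bounded (fun x => hsub (f x) (g x)).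
Proof.
  intros [a [Ha Fa]] [b [Hb Gb]]. exists (a + b). split; [lra|]. intros x.
  pose proof (hnorm_hsub_le (f x) (g x)). pose proof (Fa x). pose proof (Gb x). lra.
Qed.

Lemma zero_map_finite_rank k : is_linear (fun _ : H1 => @hzero H2) /\
  is_bounded (fun _ : H1 => @hzero H2) /\ rank_le k (fun _ : H1 => @hzero H2).
Proof.
  split; [|split].
  - split; intros; [symmetry; apply hadd_0l | symmetry; apply hscal_0r].
  - exists 0. split; [lra|]. intros. rewrite hnorm_0. lra.
  - exists (fun _ => hzero). intros x. exists (fun _ => RtoC 0). symmetry. apply lincomb_zero.
Qed.

Lemma snum_ge0 (S : H1 -> H2) k : 0 <= snum S k.
Proof.
  apply real_Glb_ge.
  - intros r (F & _ & _ & _ & ->). apply opnorm_ge0.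
  - exists (opnorm (fun x => hsub (S x) hzero)), (fun _ => hzero).
    pose proof (zero_map_finite_rank k). tauto.
Qed.

Lemma snum_le_opnorm (S F : H1 -> H2) k :
  is_linear F -> is_bounded F -> rank_le k F -> snum S k <= opnorm (fun x => hsub (S x) (F x)).
Proof.
  intros HF1 HF2 HF3. apply (real_Glb_le _ 0).
  - intros r (G & _ & _ & _ & ->). apply opnorm_ge0.
  - exists F. auto.
Qed.

Lemma snum_ge (S : H1 -> H2) k d :
  (forall F : H1 -> H2, is_linear F -> is_bounded F -> rank_le k F ->
     d <= opnorm (fun x => hsub (S x) (F x))) -> d <= snum S k.
Proof.
  intros HF. apply real_Glb_ge.
  - intros r (G & HG1 & HG2 & HG3 & ->). auto.
  - exists (opnorm (fun x => hsub (S x) hzero)), (fun _ => hzero).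
    pose proof (zero_map_finite_rank k). tauto.
Qed.

End OperatorNorm.

(** * The diagonal operator [diag (w ^ k)] *)

Lemma pow_antitone (w : R) n m : 0 <= w <= 1 -> (n <= m)%nat -> w ^ m <= w ^ n.
Proof.
  intros Hw Hnm. replace m with (n + (m - n))%nat by lia. rewrite pow_add.
  pose proof (pow_le w n (proj1 Hw)). pose proof (pow_le w (m - n) (proj1 Hw)).
  assert (w ^ (m - n) <= 1) by (rewrite <- (pow1 (m - n)); apply pow_incr; lra).
  nra.
Qed.

Lemma pow_le_1 (w : R) n : 0 <= w <= 1 -> w ^ n <= 1.
Proof. intros Hw. apply (pow_antitone w 0 n Hw). lia. Qed.

Section Diagonal.
Context {H : HSpace} (e : nat -> H) (He : orthonormal e) (w : R) (Hw : 0 < w < 1).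

Definition diag_coef (x : H) (k : nat) : C := Cmult (RtoC (w ^ k)) (hinner x (e k)).

Definition diag_partial (n : nat) (x : H) : H := lincomb n (diag_coef x) e.

Lemma Cmod_diag_coef x k : Cmod (diag_coef x k) = w ^ k * Cmod (hinner x (e k)).
Proof.
  unfold diag_coef. rewrite Cmod_mult, Cmod_R, Rabs_right by (apply Rle_ge, pow_le; lra).
  reflexivity.
Qed.

Lemma hnorm_diag_partial_hsub x n m : (n <= m)%nat ->
  hnorm (hsub (diag_partial m x) (diag_partial n x)) <= w ^ n * hnorm x.
Proof.
  intros Hnm. unfold diag_partial. rewrite (lincomb_pad n m), lincomb_hsub by exact Hnm.
  pose proof (pow_le w n ltac:(lra)). pose proof (hnorm_ge0 x).
  apply hnorm_le_sqr; [nra|]. rewrite hnorm2_lincomb by exact He.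
  replace (w ^ n * hnorm x * (w ^ n * hnorm x)) with (w ^ n * w ^ n * hnorm2 x)
    by (rewrite <- hnorm_sqr; ring).
  eapply Rle_trans; [|apply Rmult_le_compat_l; [nra | apply (bessel e He m x)]].
  rewrite <- rsum_scal. apply rsum_le. intros k Hk.
  pose proof (pow2_ge_0 (Cmod (hinner x (e k)))).
  destruct (Nat.ltb_spec k n).
  - replace (Cminus (diag_coef x k) (diag_coef x k)) with (RtoC 0)
      by (apply injective_projections; simpl; ring).
    rewrite Cmod_0. nra.
  - replace (Cminus (diag_coef x k) (RtoC 0)) with (diag_coef x k)
      by (apply injective_projections; simpl; ring).
    rewrite Cmod_diag_coef.
    assert (w ^ k <= w ^ n) by (apply pow_antitone; lra || lia).
    pose proof (pow_le w k ltac:(lra)).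
    replace ((w ^ k * Cmod (hinner x (e k))) ^ 2) with (w ^ k * w ^ k * Cmod (hinner x (e k)) ^ 2)
      by ring.
    apply Rmult_le_compat_r; [lra | nra].
Qed.

Lemma diag_partial_cauchy x :
  forall eps, 0 < eps -> exists N, forall m n, (N <= m)%nat -> (N <= n)%nat ->
    hnorm (hsub (diag_partial m x) (diag_partial n x)) < eps.
Proof.
  intros eps Heps. pose proof (hnorm_ge0 x).
  destruct (pow_lt_1_zero w ltac:(rewrite Rabs_right; lra) (eps / (hnorm x + 1)))
    as [N HN]; [apply Rdiv_lt_0_compat; lra|].
  assert (Hclose : forall a b, (N <= a)%nat -> (a <= b)%nat ->
            hnorm (hsub (diag_partial b x) (diag_partial a x)) < eps).
  { intros a b Ha Hab. eapply Rle_lt_trans; [apply hnorm_diag_partial_hsub, Hab|].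
    specialize (HN a Ha). rewrite Rabs_right in HN by (apply Rle_ge, pow_le; lra).
    apply (Rmult_lt_compat_r (hnorm x + 1)) in HN; [|lra].
    unfold Rdiv in HN. rewrite Rmult_assoc, Rinv_l in HN by lra.
    pose proof (pow_le w a ltac:(lra)). nra. }
  exists N. intros m n Hm Hn. destruct (le_ge_dec n m).
  - apply Hclose; auto.
  - rewrite hnorm_hsub_sym. apply Hclose; lia.
Qed.

Definition diag_op (x : H) : H :=
  proj1_sig (constructive_indefinite_description _ (hcomplete _ (diag_partial_cauchy x))).

Lemma diag_op_hlim x : hlim (fun n => diag_partial n x) (diag_op x).
Proof. unfold diag_op. destruct constructive_indefinite_description as [l Hl]. exact Hl. Qed.

Lemma diag_op_hsub_partial x n : hnorm (hsub (diag_op x) (diag_partial n x)) <= w ^ n * hnorm x.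
Proof. apply (hlim_dist_le _ _ _ _ n (diag_op_hlim x)). intros m Hm. apply hnorm_diag_partial_hsub, Hm. Qed.

Lemma hnorm_diag_op_le x : hnorm (diag_op x) <= hnorm x.
Proof.
  pose proof (diag_op_hsub_partial x 0) as Hd. cbn [diag_partial lincomb pow] in Hd.
  rewrite hsub_0r, Rmult_1_l in Hd. exact Hd.
Qed.

Lemma hnorm_diag_partial_le n x : hnorm (diag_partial n x) <= hnorm x.
Proof.
  pose proof (hnorm_diag_partial_hsub x 0 n (Nat.le_0_l n)) as Hd.
  cbn [diag_partial lincomb pow] in Hd. rewrite hsub_0r, Rmult_1_l in Hd. exact Hd.
Qed.

Lemma diag_partial_linear n : is_linear (diag_partial n).
Proof.
  unfold diag_partial, diag_coef. split; intros.
  - rewrite lincomb_hadd. apply lincomb_ext; intros. rewrite hinner_hadd_l. ring.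
  - rewrite lincomb_hscal. apply lincomb_ext; intros. rewrite hinner_hscal_l. ring.
Qed.

Lemma diag_op_linear : is_linear diag_op.
Proof.
  split; intros.
  - apply (hlim_unique (fun n => diag_partial n (hadd x y))); [apply diag_op_hlim|].
    apply hlim_ext with (fun n => hadd (diag_partial n x) (diag_partial n y)).
    + intros n. symmetry. apply (diag_partial_linear n).
    + apply hlim_hadd; apply diag_op_hlim.
  - apply (hlim_unique (fun n => diag_partial n (hscal a x))); [apply diag_op_hlim|].
    apply hlim_ext with (fun n => hscal a (diag_partial n x)).
    + intros n. symmetry. apply (diag_partial_linear n).
    + apply hlim_hscal, diag_op_hlim.
Qed.

Lemma diag_op_bounded : is_bounded diag_op.
Proof. exists 1. split; [lra|]. intros x. rewrite Rmult_1_l. apply hnorm_diag_op_le. Qed.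

Definition diag_bh : BH H := exist _ diag_op (conj diag_op_linear diag_op_bounded).

Lemma diag_op_basis j : diag_op (e j) = hscal (RtoC (w ^ j)) (e j).
Proof.
  apply (hlim_unique (fun n => diag_partial n (e j))); [apply diag_op_hlim|].
  apply (hlim_eventually_const _ _ (S j)). intros n Hn. unfold diag_partial.
  rewrite <- (lincomb_single n _ j) by lia. apply lincomb_ext. intros k _.
  unfold diag_coef. rewrite He.
  destruct (Nat.eqb_spec j k), (Nat.eqb_spec k j); subst; try lia;
    apply injective_projections; simpl; ring.
Qed.

Lemma hinner_diag_op x i : hinner (diag_op x) (e i) = Cmult (RtoC (w ^ i)) (hinner x (e i)).
Proof.
  set (d := Cminus (hinner (diag_op x) (e i)) (diag_coef x i)).
  assert (Hd : Cmod d <= 0).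
  { apply (le_of_lim0_bound _ 0 _ (S i) (diag_op_hlim x)). intros n Hn.
    rewrite Rplus_0_r, hnorm_hsub_sym.
    replace d with (hinner (hsub (diag_op x) (diag_partial n x)) (e i));
      [apply Cmod_hinner_le, He|].
    unfold d, diag_partial. rewrite hinner_hsub_l, hinner_lincomb_basis by exact He.
    destruct (Nat.ltb_spec i n); [reflexivity | lia]. }
  pose proof (Cmod_ge_0 d). assert (Hd0 : d = RtoC 0) by (apply Cmod_eq_0; lra).
  unfold d, diag_coef in Hd0.
  rewrite <- (Cplus_0_l (Cmult _ _)), <- Hd0. ring.
Qed.

Lemma snum_diag_op_le n : snum diag_op n <= w ^ n.
Proof.
  eapply Rle_trans; [apply (snum_le_opnorm _ (diag_partial n))|].
  - apply diag_partial_linear.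
  - exists 1. split; [lra|]. intros x. rewrite Rmult_1_l.
    apply hnorm_diag_partial_le.
  - exists e. intros x. exists (diag_coef x). reflexivity.
  - apply opnorm_le. intros x Hx. eapply Rle_trans; [apply diag_op_hsub_partial|].
    pose proof (pow_le w n ltac:(lra)). nra.
Qed.

End Diagonal.

(** * Lower bound for approximation numbers of diagonal operators *)

(* [c q i] is the coefficient of the unknown [q] in the equation [i]: [k] homogeneous
   equations in [k + 1] unknowns. *)
Definition left_kernel_nontrivial (k : nat) (c : nat -> nat -> C) : Prop :=
  exists a : nat -> C, (exists q, (q <= k)%nat /\ a q <> RtoC 0) /\
    forall i, (i < k)%nat -> csum (S k) (fun q => Cmult (a q) (c q i)) = RtoC 0.

Definition swap (p r q : nat) : nat :=
  if Nat.eqb q p then r else if Nat.eqb q r then p else q.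

Lemma swap_involutive p r q : swap p r (swap p r q) = q.
Proof.
  unfold swap.
  destruct (Nat.eqb_spec q p) as [-> | Hqp].
  { destruct (Nat.eqb_spec r p); subst; now rewrite ?Nat.eqb_refl. }
  destruct (Nat.eqb_spec q r) as [-> | Hqr]; [now rewrite Nat.eqb_refl|].
  destruct (Nat.eqb_spec q p), (Nat.eqb_spec q r); lia.
Qed.

Lemma swap_lt p r q n : (p < n)%nat -> (r < n)%nat -> (q < n)%nat -> (swap p r q < n)%nat.
Proof. unfold swap. destruct (Nat.eqb q p), (Nat.eqb q r); auto. Qed.

Lemma csum_change_one n (f g : nat -> C) j : (j < n)%nat -> (forall q, q <> j -> f q = g q) ->
  csum n f = Cplus (csum n g) (Cminus (f j) (g j)).
Proof.
  induction n; intros Hj E; [lia|]. simpl.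
  destruct (Nat.eq_dec j n) as [-> | Hjn].
  - rewrite (csum_ext n f g) by (intros; apply E; lia). ring.
  - rewrite IHn, (E n) by (try exact E; lia). ring.
Qed.

Lemma csum_swap n (g : nat -> C) p r : (p < n)%nat -> (r < n)%nat ->
  csum n (fun q => g (swap p r q)) = csum n g.
Proof.
  intros Hp Hr. destruct (Nat.eq_dec p r) as [<- | Hpr].
  - apply csum_ext. intros q _. unfold swap.
    destruct (Nat.eqb_spec q p); subst; reflexivity.
  - set (g2 := fun q => if Nat.eqb q p then g r else g q).
    rewrite (csum_change_one n _ g2 r), (csum_change_one n g2 g p); auto.
    + unfold g2, swap. rewrite Nat.eqb_refl. destruct (Nat.eqb_spec r p); [lia|].
      rewrite Nat.eqb_refl. ring.
    + intros q Hq. unfold g2. destruct (Nat.eqb_spec q p); [lia | reflexivity].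
    + intros q Hq. unfold g2, swap.
      destruct (Nat.eqb_spec q p), (Nat.eqb_spec q r); reflexivity || lia.
Qed.

Lemma left_kernel_nontrivial_swap k c p : (p <= k)%nat ->
  left_kernel_nontrivial k (fun q => c (swap p k q)) -> left_kernel_nontrivial k c.
Proof.
  intros Hp [a [[q0 [Hq0 Ha0]] Ha]].
  exists (fun q => a (swap p k q)). split.
  - exists (swap p k q0). split; [apply Nat.lt_succ_r, swap_lt; lia|].
    rewrite swap_involutive. exact Ha0.
  - intros i Hi. rewrite <- (Ha i Hi), <- (csum_swap (S k) _ p k) by lia.
    apply csum_ext. intros q _. rewrite swap_involutive. reflexivity.
Qed.

Lemma left_kernel_nontrivial_zero_column k c :
  left_kernel_nontrivial k c -> (forall q, (q <= S k)%nat -> c q k = RtoC 0) ->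
  left_kernel_nontrivial (S k) c.
Proof.
  intros [a [[q0 [Hq0 Ha0]] Ha]] Hzero.
  exists (fun q => if Nat.leb q k then a q else RtoC 0). split.
  - exists q0. split; [lia|]. destruct (Nat.leb_spec q0 k); [exact Ha0 | lia].
  - intros i Hi. rewrite csum_S. destruct (Nat.leb_spec (S k) k); [lia|].
    rewrite (csum_ext (S k) _ (fun q => Cmult (a q) (c q i)))
      by (intros q Hq; destruct (Nat.leb_spec q k); [reflexivity | lia]).
    destruct (Nat.eq_dec i k) as [-> | Hik].
    + rewrite (csum_ext (S k) _ (fun _ => RtoC 0)), csum_zero; [ring|].
      intros q Hq. rewrite Hzero by lia. ring.
    + rewrite Ha by lia. ring.
Qed.

(* Gaussian elimination of the last unknown, using the pivot [c (S k) k]. *)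
Lemma left_kernel_nontrivial_pivot k c :
  (forall c', left_kernel_nontrivial k c') -> c (S k) k <> RtoC 0 ->
  left_kernel_nontrivial (S k) c.
Proof.
  intros IH HP. set (P := c (S k) k) in *.
  set (c' := fun q i => Cminus (c q i) (Cmult (Cdiv (c q k) P) (c (S k) i))).
  destruct (IH c') as [a [[q0 [Hq0 Ha0]] Ha]].
  set (X := csum (S k) (fun q => Cmult (a q) (c q k))).
  exists (fun q => if Nat.leb q k then a q else Copp (Cdiv X P)). split.
  - exists q0. split; [lia|]. destruct (Nat.leb_spec q0 k); [exact Ha0 | lia].
  - intros i Hi. rewrite csum_S. destruct (Nat.leb_spec (S k) k); [lia|].
    rewrite (csum_ext (S k) _ (fun q => Cplus (Cmult (a q) (c' q i))
               (Cmult (Cdiv (c (S k) i) P) (Cmult (a q) (c q k))))).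
    2: { intros q Hq. destruct (Nat.leb_spec q k); [|lia]. unfold c'. field. exact HP. }
    rewrite csum_Cplus, csum_Cmult_l. fold X.
    destruct (Nat.eq_dec i k) as [-> | Hik].
    + rewrite (csum_ext (S k) _ (fun _ => RtoC 0)), csum_zero.
      * fold P. field. exact HP.
      * intros q _. unfold c'. fold P. field. exact HP.
    + rewrite Ha by lia. field. exact HP.
Qed.

Lemma left_kernel_nontrivial_all k c : left_kernel_nontrivial k c.
Proof.
  revert c. induction k; intros c.
  - exists (fun _ => RtoC 1). split; [|intros; lia].
    exists 0%nat. split; [lia|]. intros E. injection E. lra.
  - destruct (classic (exists p, (p <= S k)%nat /\ c p k <> RtoC 0)) as [[p [Hp Hpiv]] | Hzero].
    + apply (left_kernel_nontrivial_swap (S k) c p Hp).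
      apply left_kernel_nontrivial_pivot; [exact IHk|].
      unfold swap. rewrite Nat.eqb_refl.
      destruct (Nat.eqb_spec (S k) p) as [<- | _]; exact Hpiv.
    + apply left_kernel_nontrivial_zero_column; [apply IHk|].
      intros q Hq. apply NNPP. intros Hcq. apply Hzero. eauto.
Qed.

Lemma rank_le_kernel_vector {H1 H2 : HSpace} (e : nat -> H1) (F : H1 -> H2) k :
  is_linear F -> rank_le k F ->
  exists a : nat -> C, (exists q, (q <= k)%nat /\ a q <> RtoC 0) /\
    F (lincomb (S k) a e) = hzero.
Proof.
  intros HF [v Hv].
  set (c := fun q => proj1_sig (constructive_indefinite_description _ (Hv (e q)))).
  assert (Hc : forall q, F (e q) = lincomb k (c q) v).
  { intros q. unfold c. destruct constructive_indefinite_description as [cq Hcq]. exact Hcq. }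
  destruct (left_kernel_nontrivial_all k c) as [a [Ha0 Ha]].
  exists a. split; [exact Ha0|].
  rewrite lincomb_linear, (lincomb_ext_vec _ _ _ (fun q => lincomb k (c q) v)), lincomb_nested
    by auto.
  rewrite (lincomb_ext k _ (fun _ => RtoC 0)); [apply lincomb_zero | exact Ha].
Qed.

Section DiagonalLowerBound.
Context {H : HSpace} (e : nat -> H) (He : orthonormal e).

Lemma hnorm2_diagonal_ge N K (lam : nat -> R) d a : (K <= N)%nat -> 0 <= d ->
  (forall q, (q < N)%nat -> d <= lam q) ->
  let x := lincomb K a e in
  d * d * hnorm2 x <= hnorm2 (lincomb N (fun q => Cmult (RtoC (lam q)) (hinner x (e q))) e).
Proof.
  intros HKN Hd Hlam x.
  assert (Hx : hnorm2 x = rsum K (fun q => Cmod (a q) ^ 2)) by (apply hnorm2_lincomb, He).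
  rewrite Hx, hnorm2_lincomb by exact He.
  assert (Hcoef : forall q, hinner x (e q) = if Nat.ltb q K then a q else RtoC 0)
    by (intros q; apply hinner_lincomb_basis, He).
  rewrite (rsum_tail_zero N K); [| exact HKN |].
  2: { intros q Hq. rewrite Hcoef. destruct (Nat.ltb_spec q K); [lia|].
       rewrite Cmult_0_r, Cmod_0. ring. }
  rewrite <- rsum_scal. apply rsum_le. intros q Hq.
  rewrite Hcoef. destruct (Nat.ltb_spec q K); [|lia].
  rewrite Cmod_mult, Cmod_R. specialize (Hlam q ltac:(lia)).
  rewrite Rabs_right by lra. pose proof (Cmod_ge_0 (a q)).
  replace ((lam q * Cmod (a q)) ^ 2) with (lam q * lam q * Cmod (a q) ^ 2) by ring.
  apply Rmult_le_compat_r; [apply pow2_ge_0 | nra].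
Qed.

Definition diag_finite N (lam : nat -> R) (x : H) : H :=
  lincomb N (fun q => Cmult (RtoC (lam q)) (hinner x (e q))) e.

Lemma diag_finite_linear N lam : is_linear (diag_finite N lam).
Proof.
  unfold diag_finite. split; intros.
  - rewrite lincomb_hadd. apply lincomb_ext. intros. rewrite hinner_hadd_l. ring.
  - rewrite lincomb_hscal. apply lincomb_ext. intros. rewrite hinner_hscal_l. ring.
Qed.

Lemma diag_finite_bounded N lam : (forall q, (q < N)%nat -> Rabs (lam q) <= 1) ->
  is_bounded (diag_finite N lam).
Proof.
  intros Hlam. exists (INR N). split; [apply pos_INR|]. intros x.
  eapply Rle_trans; [apply hnorm_lincomb_le|]. apply rsum_le_const. intros q Hq.
  rewrite hnorm_orthonormal, Rmult_1_r, Cmod_mult, Cmod_R by exact He.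
  pose proof (Cmod_hinner_le e He x q). pose proof (Cmod_ge_0 (hinner x (e q))).
  specialize (Hlam q Hq). pose proof (Rabs_pos (lam q)). nra.
Qed.

Lemma snum_diag_finite_ge N (lam : nat -> R) d :
  0 < d -> (forall q, (q < N)%nat -> d <= lam q <= 1) ->
  forall k, (k < N)%nat -> d <= snum (diag_finite N lam) k.
Proof.
  intros Hd Hlam k Hk. apply snum_ge. intros F Flin Fbnd Frank.
  destruct (rank_le_kernel_vector e F k Flin Frank) as [a [[q0 [Hq0 Ha0]] HFx]].
  set (x := lincomb (S k) a e) in HFx.
  assert (Hx : 0 < hnorm x).
  { apply sqrt_lt_R0. fold (hnorm2 x). unfold x. rewrite hnorm2_lincomb by exact He.
    eapply Rlt_le_trans; [|apply (rsum_ge_term _ _ q0); [intros; apply pow2_ge_0 | lia]].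
    apply pow2_gt_0. intros E. apply Cmod_eq_0 in E. auto. }
  assert (HTx : d * hnorm x <= hnorm (hsub (diag_finite N lam x) (F x))).
  { rewrite HFx, hsub_0r. apply Rsqr_incr_0_var; [|apply hnorm_ge0].
    unfold Rsqr. rewrite hnorm_sqr.
    replace (d * hnorm x * (d * hnorm x)) with (d * d * hnorm2 x) by (rewrite <- hnorm_sqr; ring).
    refine (hnorm2_diagonal_ge N (S k) lam d a ltac:(lia) ltac:(lra) _).
    intros q Hq. apply Hlam, Hq. }
  assert (Tbnd : is_bounded (diag_finite N lam)).
  { apply diag_finite_bounded. intros q Hq. specialize (Hlam q Hq).
    rewrite Rabs_right by lra. lra. }
  pose proof (hnorm_le_opnorm _ x (is_linear_hsub _ _ (diag_finite_linear N lam) Flin)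
                (is_bounded_hsub _ _ Tbnd Fbnd)).
  apply (Rmult_le_reg_r (hnorm x)); [exact Hx | lra].
Qed.

End DiagonalLowerBound.

(** * Hilbert numbers of [M_{A,A}] *)

Section HilbertNumbers.
Context {H : HSpace}.

(* The two factorization conditions in the definition of [hnum]. *)
Definition contraction_from_BH {H' : HSpace} (A' : BH H -> H') : Prop :=
  (forall X Y Z : BH H, (forall h, proj1_sig Z h = hadd (proj1_sig X h) (proj1_sig Y h)) ->
     A' Z = hadd (A' X) (A' Y)) /\
  (forall (a : C) (X Z : BH H), (forall h, proj1_sig Z h = hscal a (proj1_sig X h)) ->
     A' Z = hscal a (A' X)) /\
  (forall X : BH H, hnorm (A' X) <= opnorm (proj1_sig X)).

Definition contraction_into_BH {K' : HSpace} (B' : K' -> BH H) : Prop :=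
  (forall x y h, proj1_sig (B' (hadd x y)) h = hadd (proj1_sig (B' x) h) (proj1_sig (B' y) h)) /\
  (forall a x h, proj1_sig (B' (hscal a x)) h = hscal a (proj1_sig (B' x) h)) /\
  (forall x, opnorm (proj1_sig (B' x)) <= hnorm x).

Lemma snum_factorization_le_1 (T : BH H -> BH H) k {H' K' : HSpace}
    (A' : BH H -> H') (B' : K' -> BH H) :
  (forall X, opnorm (proj1_sig (T X)) <= opnorm (proj1_sig X)) ->
  contraction_from_BH A' -> contraction_into_BH B' ->
  snum (fun x => A' (T (B' x))) k <= 1.
Proof.
  intros HT (_ & _ & HA) (_ & _ & HB).
  destruct (zero_map_finite_rank (H1 := K') (H2 := H') k) as (Zlin & Zbnd & Zrank).
  eapply Rle_trans; [apply (snum_le_opnorm _ _ k Zlin Zbnd Zrank)|].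
  apply opnorm_le. intros x Hx. rewrite hsub_0r.
  eapply Rle_trans; [apply HA|]. eapply Rle_trans; [apply HT|].
  eapply Rle_trans; [apply HB | exact Hx].
Qed.

Lemma hnum_ge_factorization (T : BH H -> BH H) k {H' K' : HSpace}
    (A' : BH H -> H') (B' : K' -> BH H) :
  (forall X, opnorm (proj1_sig (T X)) <= opnorm (proj1_sig X)) ->
  contraction_from_BH A' -> contraction_into_BH B' ->
  snum (fun x => A' (T (B' x))) k <= hnum T k.
Proof.
  intros HT HA HB. apply (real_Lub_ge _ 1).
  - intros r (H'' & K'' & A'' & B'' & A1 & A2 & A3 & B1 & B2 & B3 & ->).
    apply snum_factorization_le_1; [exact HT | repeat split; auto | repeat split; auto].
  - exists H', K', A', B'. destruct HA as (A1 & A2 & A3), HB as (B1 & B2 & B3).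
    repeat split; auto.
Qed.

Lemma opnorm_MAA_le (A X : BH H) : (forall y, hnorm (proj1_sig A y) <= hnorm y) ->
  opnorm (proj1_sig (MAA A X)) <= opnorm (proj1_sig X).
Proof.
  intros HA. apply opnorm_le. intros h Hh. simpl.
  destruct X as [X [Xlin Xbnd]]. simpl.
  eapply Rle_trans; [apply HA|]. eapply Rle_trans; [apply hnorm_le_opnorm; auto|].
  pose proof (opnorm_ge0 X). pose proof (HA h). pose proof (hnorm_ge0 (proj1_sig A h)). nra.
Qed.

End HilbertNumbers.

(* An index [q < m * m] stands for the matrix position [(q mod m, q / m)]. *)

Definition mrow (m q : nat) : nat := Nat.modulo q m.
Definition mcol (m q : nat) : nat := Nat.div q m.

Lemma mrow_lt m q : (1 <= m)%nat -> (mrow m q < m)%nat.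
Proof. intros. apply Nat.mod_upper_bound. lia. Qed.

Lemma mcol_lt m q : (q < m * m)%nat -> (mcol m q < m)%nat.
Proof. intros. apply Nat.Div0.div_lt_upper_bound. exact H. Qed.

Lemma mrow_mcol_inj m q k : mrow m q = mrow m k -> mcol m q = mcol m k -> q = k.
Proof.
  unfold mrow, mcol. intros E1 E2.
  rewrite (Nat.div_mod_eq q m), (Nat.div_mod_eq k m), E1, E2. reflexivity.
Qed.

Section Factorization.
Context {H : HSpace} (e : nat -> H) (He : orthonormal e) (m : nat) (Hm : (1 <= m)%nat).

(* Normalizing by [1 / (m * m)] makes both factors contractions, by the triangle inequality
   over the [m * m] terms. *)
Definition mscale : R := / INR (m * m).

Lemma mscale_pos : 0 < mscale.
Proof. apply Rinv_0_lt_compat, lt_0_INR. nia. Qed.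

Lemma mscale_le_1 : mscale <= 1.
Proof.
  unfold mscale. rewrite <- Rinv_1. apply Rinv_le_contravar; [lra|].
  replace 1 with (INR 1) by reflexivity. apply le_INR. nia.
Qed.

Lemma INR_mscale : INR (m * m) * mscale = 1.
Proof. unfold mscale. field. apply not_0_INR. nia. Qed.

Lemma hnorm_mscale_lincomb_le (c : nat -> C) (v : nat -> H) M :
  (forall q, (q < m * m)%nat -> Cmod (c q) <= M /\ hnorm (v q) = 1) ->
  hnorm (lincomb (m * m) (fun q => Cmult (RtoC mscale) (c q)) v) <= M.
Proof.
  intros Hc. pose proof mscale_pos.
  eapply Rle_trans; [apply hnorm_lincomb_le|].
  eapply Rle_trans; [apply (rsum_le_const _ _ (mscale * M))|].
  - intros q Hq. destruct (Hc q Hq) as [HcM ->].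
    rewrite Cmod_mult, Cmod_R, Rabs_right by lra. nra.
  - rewrite <- Rmult_assoc, INR_mscale. lra.
Qed.

Definition entry_extract (X : BH H) : H :=
  lincomb (m * m)
    (fun q => Cmult (RtoC mscale) (hinner (proj1_sig X (e (mcol m q))) (e (mrow m q)))) e.

Lemma entry_extract_contraction : contraction_from_BH entry_extract.
Proof.
  unfold entry_extract. split; [|split].
  - intros X Y Z HZ. rewrite lincomb_hadd. apply lincomb_ext. intros q _.
    rewrite HZ, hinner_hadd_l. ring.
  - intros a X Z HZ. rewrite lincomb_hscal. apply lincomb_ext. intros q _.
    rewrite HZ, hinner_hscal_l. ring.
  - intros [X [Xlin Xbnd]]. simpl. apply hnorm_mscale_lincomb_le. intros q _.
    split; [|apply hnorm_orthonormal, He].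
    eapply Rle_trans; [apply Cmod_hinner_le, He|].
    eapply Rle_trans; [apply hnorm_le_opnorm; auto|].
    rewrite hnorm_orthonormal by exact He. lra.
Qed.

Definition rank_one_sum (x : H) (y : H) : H :=
  lincomb (m * m)
    (fun q => Cmult (RtoC mscale) (Cmult (hinner x (e q)) (hinner y (e (mcol m q)))))
    (fun q => e (mrow m q)).

Lemma rank_one_sum_linear_in x : is_linear (rank_one_sum x).
Proof.
  unfold rank_one_sum. split; intros.
  - rewrite lincomb_hadd. apply lincomb_ext. intros. rewrite hinner_hadd_l. ring.
  - rewrite lincomb_hscal. apply lincomb_ext. intros. rewrite hinner_hscal_l. ring.
Qed.

Lemma hnorm_rank_one_sum_le x y : hnorm (rank_one_sum x y) <= hnorm x * hnorm y.
Proof.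
  apply hnorm_mscale_lincomb_le. intros q _. split; [|apply hnorm_orthonormal, He].
  rewrite Cmod_mult.
  apply Rmult_le_compat; try apply Cmod_ge_0; apply Cmod_hinner_le, He.
Qed.

Lemma rank_one_sum_bounded x : is_bounded (rank_one_sum x).
Proof.
  exists (hnorm x). split; [apply hnorm_ge0|]. intros y. apply hnorm_rank_one_sum_le.
Qed.

Definition rank_one_sum_bh (x : H) : BH H :=
  exist _ (rank_one_sum x) (conj (rank_one_sum_linear_in x) (rank_one_sum_bounded x)).

Lemma rank_one_sum_contraction : contraction_into_BH rank_one_sum_bh.
Proof.
  unfold rank_one_sum_bh. split; [|split]; simpl.
  - intros x y h. unfold rank_one_sum. rewrite lincomb_hadd. apply lincomb_ext. intros q _.
    rewrite hinner_hadd_l. ring.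
  - intros a x h. unfold rank_one_sum. rewrite lincomb_hscal. apply lincomb_ext. intros q _.
    rewrite hinner_hscal_l. ring.
  - intros x. apply opnorm_le. intros y Hy.
    pose proof (hnorm_rank_one_sum_le x y). pose proof (hnorm_ge0 x). nra.
Qed.


Context (w : R) (Hw : 0 < w < 1).

Definition factor_eigen (k : nat) : R :=
  mscale * mscale * w ^ (mrow m k) * w ^ (mcol m k).

Lemma factor_eigen_bounds k : (k < m * m)%nat ->
  (mscale * w ^ m) ^ 2 <= factor_eigen k <= 1.
Proof.
  intros Hk. unfold factor_eigen. pose proof mscale_pos. pose proof mscale_le_1.
  assert (w ^ m <= w ^ mrow m k) by (apply pow_antitone; [lra | apply Nat.lt_le_incl, mrow_lt, Hm]).
  assert (w ^ m <= w ^ mcol m k) by (apply pow_antitone; [lra | apply Nat.lt_le_incl, mcol_lt, Hk]).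
  assert (w ^ mrow m k <= 1) by (apply pow_le_1; lra).
  assert (w ^ mcol m k <= 1) by (apply pow_le_1; lra).
  pose proof (pow_le w m ltac:(lra)).
  split.
  - replace ((mscale * w ^ m) ^ 2) with (mscale * mscale * w ^ m * w ^ m) by ring.
    apply Rmult_le_compat; [| lra | apply Rmult_le_compat_l |]; nra.
  - replace 1 with (1 * 1 * 1 * 1) by ring.
    apply Rmult_le_compat; [| apply pow_le | apply Rmult_le_compat |]; nra.
Qed.

Lemma entry_extract_MAA_diag x :
  entry_extract (MAA (diag_bh e He w Hw) (rank_one_sum_bh x)) = diag_finite e (m * m) factor_eigen x.
Proof.
  unfold entry_extract, diag_finite. apply lincomb_ext. intros k Hk. simpl.
  rewrite hinner_diag_op, diag_op_basis by exact He. unfold rank_one_sum. rewrite hinner_lincomb_l.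
  rewrite (csum_ext (m * m) _ (fun q => Cmult
             (Cmult (RtoC mscale) (Cmult (RtoC (w ^ mcol m k)) (hinner x (e q))))
             (if Nat.eqb q k then RtoC 1 else RtoC 0))).
  - rewrite csum_kronecker. destruct (Nat.ltb_spec k (m * m)); [|lia].
    unfold factor_eigen. apply injective_projections; simpl; ring.
  - intros q Hq. rewrite hinner_hscal_l, !He.
    destruct (Nat.eqb_spec q k) as [-> | Hqk].
    + rewrite !Nat.eqb_refl. apply injective_projections; simpl; ring.
    + destruct (Nat.eqb_spec (mcol m k) (mcol m q)), (Nat.eqb_spec (mrow m q) (mrow m k));
        try (apply injective_projections; simpl; ring).
      exfalso. apply Hqk. apply mrow_mcol_inj with m; auto.
Qed.

Lemma hnum_MAA_diag_ge k : (k < m * m)%nat ->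
  (mscale * w ^ m) ^ 2 <= hnum (MAA (diag_bh e He w Hw)) k.
Proof.
  intros Hk.
  eapply Rle_trans; [|apply (hnum_ge_factorization _ k entry_extract rank_one_sum_bh)].
  - replace (fun x => entry_extract (MAA (diag_bh e He w Hw) (rank_one_sum_bh x)))
      with (diag_finite e (m * m) factor_eigen)
      by (apply functional_extensionality; intros x; symmetry; apply entry_extract_MAA_diag).
    apply snum_diag_finite_ge; [exact He | | apply factor_eigen_bounds | exact Hk].
    apply pow_lt, Rmult_lt_0_compat; [apply mscale_pos | apply pow_lt; lra].
  - intros X. apply opnorm_MAA_le. intros y. apply hnorm_diag_op_le.
  - apply entry_extract_contraction.
  - apply rank_one_sum_contraction.
Qed.

End Factorization.

(** * Rearrangements and the Calkin space of exponentially decaying sequences *)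

Lemma exists_not_In_le (l : list nat) n : (length l <= n)%nat -> exists j, (j <= n)%nat /\ ~ In j l.
Proof.
  intros Hl. apply NNPP. intros Hnone.
  assert (Hincl : incl (seq 0 (S n)) l).
  { intros j Hj. apply in_seq in Hj. apply NNPP. intros Hj'. apply Hnone. exists j. split; [lia | exact Hj']. }
  pose proof (NoDup_incl_length (seq_NoDup (S n) 0) Hincl). rewrite length_seq in *. lia.
Qed.

Definition tail_sup (a : nat -> C) (l : list nat) : R :=
  real (Lub_Rbar (fun s => exists j, ~ In j l /\ s = Cmod (a j))).

Lemma dstar_tail_sup a k :
  dstar a k = real (Glb_Rbar (fun r => exists l : list nat, (length l <= k)%nat /\ r = tail_sup a l)).
Proof. reflexivity. Qed.

Lemma tail_sup_ge0 a l : 0 <= tail_sup a l.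
Proof. apply real_Lub_ge0. intros s [j [_ ->]]. apply Cmod_ge_0. Qed.

Lemma tail_sup_le a l M : (forall j, ~ In j l -> Cmod (a j) <= M) -> tail_sup a l <= M.
Proof.
  intros HM. apply real_Lub_le.
  - intros s [j [Hj ->]]. auto.
  - destruct (exists_not_In_le l (length l) (le_n _)) as [j [_ Hj]]. eauto.
Qed.

Lemma tail_sup_ge a l M j : (forall i, Cmod (a i) <= M) -> ~ In j l -> Cmod (a j) <= tail_sup a l.
Proof. intros HM Hj. apply (real_Lub_ge _ M); [intros s [i [_ ->]]; auto | eauto]. Qed.

Lemma dstar_le a n (l : list nat) M : (length l <= n)%nat ->
  (forall j, ~ In j l -> Cmod (a j) <= M) -> dstar a n <= M.
Proof.
  intros Hl HM. rewrite dstar_tail_sup. eapply Rle_trans; [apply (real_Glb_le _ 0)|].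
  - intros r [l' [_ ->]]. apply tail_sup_ge0.
  - exists l. split; eauto.
  - apply tail_sup_le, HM.
Qed.

Lemma dstar_ge a n d M : (forall i, Cmod (a i) <= M) ->
  (forall j, (j <= n)%nat -> d <= Cmod (a j)) -> d <= dstar a n.
Proof.
  intros HM Hd. rewrite dstar_tail_sup. apply real_Glb_ge.
  - intros r [l [Hl ->]]. destruct (exists_not_In_le l n Hl) as [j [Hj Hjl]].
    eapply Rle_trans; [apply (Hd j Hj) | apply (tail_sup_ge _ _ M); auto].
  - exists (tail_sup a nil), nil. simpl. split; [lia | reflexivity].
Qed.

Lemma is_c0_bounded a : is_c0 a -> exists M, forall i, Cmod (a i) <= M.
Proof.
  intros Ha. apply is_lim_seq_spec in Ha. destruct (Ha (mkposreal 1 Rlt_0_1)) as [N HN].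
  pose proof (rsum_ge0 N (fun i => Cmod (a i)) (fun _ _ => Cmod_ge_0 _)).
  exists (1 + rsum N (fun i => Cmod (a i))). intros i. destruct (le_lt_dec N i) as [HNi | HiN].
  - specialize (HN i HNi). simpl in HN.
    rewrite Rminus_0_r, Rabs_right in HN by (apply Rle_ge, Cmod_ge_0). lra.
  - pose proof (rsum_ge_term N (fun i => Cmod (a i)) i (fun _ _ => Cmod_ge_0 _) HiN). lra.
Qed.

Lemma is_c0_le a b : (forall n, Cmod (b n) <= Cmod (a n)) -> is_c0 a -> is_c0 b.
Proof.
  intros Hb Ha. apply is_lim_seq_le_le with (fun _ => 0) (fun n => Cmod (a n)); auto.
  - intros n. split; [apply Cmod_ge_0 | apply Hb].
  - apply is_lim_seq_const.
Qed.

(* [dstar b n <= alpha n <= dstar alpha n]. *)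
Lemma calkin_dominated (I : (nat -> C) -> Prop) (alpha b : nat -> R) :
  is_calkin I -> I (fun n => RtoC (alpha n)) ->
  (forall n, alpha (S n) <= alpha n) -> (forall n, 0 <= b n <= alpha n) ->
  I (fun n => RtoC (b n)).
Proof.
  intros (Hc0 & _ & _ & _ & Hsolid) Halpha Hdec Hb.
  assert (Hanti : forall i j, (i <= j)%nat -> alpha j <= alpha i).
  { intros i j Hij. induction Hij; [lra|]. pose proof (Hdec m). lra. }
  assert (Hb0 : forall n, 0 <= b n) by (intros n; apply Hb).
  assert (Hpos : forall n, 0 <= alpha n) by (intros n; pose proof (Hb n); lra).
  assert (HCmod : forall (r : R), 0 <= r -> Cmod (RtoC r) = r)
    by (intros r Hr; rewrite Cmod_R, Rabs_right; lra).
  apply (Hsolid _ _ Halpha).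
  - apply (is_c0_le (fun n => RtoC (alpha n))); [|exact (Hc0 _ Halpha)].
    intros n. rewrite !HCmod by auto. apply Hb.
  - intros n. apply Rle_trans with (alpha n).
    + apply (dstar_le _ n (seq 0 n)); [rewrite length_seq; lia|].
      intros j Hj. rewrite HCmod by auto.
      assert (n <= j)%nat by (destruct (le_lt_dec n j); [auto | exfalso; apply Hj, in_seq; lia]).
      pose proof (Hb j). pose proof (Hanti n j ltac:(lia)). lra.
    + apply (dstar_ge _ n _ (alpha 0%nat)).
      * intros i. rewrite HCmod by auto. apply Hanti. lia.
      * intros j Hj. rewrite HCmod by auto. apply Hanti, Hj.
Qed.

(* [dstar b n <= K r ^ n], witnessed by an explicit set of [n] exceptional indices. *)
Definition exp_decaying (b : nat -> C) : Prop :=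
  is_c0 b /\ exists K r, 0 < r < 1 /\ 0 <= K /\
    forall n, exists l : list nat, (length l <= n)%nat /\
      forall j, ~ In j l -> Cmod (b j) <= K * r ^ n.

Lemma pow_half_le rho n k : 0 < rho < 1 -> (n <= 2 * k + 1)%nat ->
  rho ^ k <= sqrt rho ^ n / sqrt rho.
Proof.
  intros Hrho Hn. set (s := sqrt rho).
  assert (Hs : 0 < s < 1).
  { unfold s. split; [apply sqrt_lt_R0; lra|]. rewrite <- sqrt_1. apply sqrt_lt_1; lra. }
  replace rho with (s ^ 2) by (unfold s; simpl; rewrite Rmult_1_r, sqrt_sqrt; lra).
  rewrite <- pow_mult.
  assert (Hq : s ^ (2 * k + 1) <= s ^ n) by (apply pow_antitone; lra || lia).
  rewrite pow_add, pow_1 in Hq. apply (Rmult_le_reg_r s); [lra|].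
  unfold Rdiv. rewrite Rmult_assoc, Rinv_l, Rmult_1_r by lra. exact Hq.
Qed.

(* Splitting the [n] exceptional indices as [n / 2] for each summand costs a square root
   in the rate. *)
Lemma exp_decaying_add a b : exp_decaying a -> exp_decaying b ->
  exp_decaying (fun n => Cplus (a n) (b n)).
Proof.
  intros [Ha (Ka & ra & Hra & HKa & Ba)] [Hb (Kb & rb & Hrb & HKb & Bb)]. split.
  - apply is_lim_seq_le_le with (fun _ => 0) (fun n => Cmod (a n) + Cmod (b n)).
    + intros n. split; [apply Cmod_ge_0 | apply Cmod_triangle].
    + apply is_lim_seq_const.
    + apply is_lim_seq_plus0; auto.
  - set (rho := Rmax ra rb). set (s := sqrt rho).
    assert (Hrho : 0 < rho < 1).
    { unfold rho. split; [apply Rlt_le_trans with ra; [lra | apply Rmax_l] | apply Rmax_lub_lt; lra]. }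
    assert (Hs : 0 < s < 1).
    { unfold s. split; [apply sqrt_lt_R0; lra|]. rewrite <- sqrt_1. apply sqrt_lt_1; lra. }
    exists ((Ka + Kb) / s), s. split; [exact Hs|]. split; [apply Rdiv_le_0_compat; lra|].
    intros n. set (k := Nat.div2 n).
    assert (Hk : (2 * k <= n <= 2 * k + 1)%nat)
      by (unfold k; destruct (Nat.Even_or_Odd n) as [E|E];
          [apply Nat.Even_double in E | apply Nat.Odd_double in E]; unfold Nat.double in E; lia).
    destruct (Ba k) as [la [Hla Hja]], (Bb k) as [lb [Hlb Hjb]].
    exists (la ++ lb). split; [rewrite length_app; lia|].
    intros j Hj. rewrite in_app_iff in Hj.
    specialize (Hja j ltac:(tauto)). specialize (Hjb j ltac:(tauto)).
    pose proof (pow_half_le rho n k Hrho (proj2 Hk)) as Hhalf. fold s in Hhalf.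
    assert (ra ^ k <= rho ^ k) by (apply pow_incr; split; [lra | apply Rmax_l]).
    assert (rb ^ k <= rho ^ k) by (apply pow_incr; split; [lra | apply Rmax_r]).
    pose proof (pow_le ra k ltac:(lra)). pose proof (pow_le rb k ltac:(lra)).
    eapply Rle_trans; [apply Cmod_triangle|].
    replace ((Ka + Kb) / s * s ^ n) with (Ka * (s ^ n / s) + Kb * (s ^ n / s)) by (field; lra).
    apply Rplus_le_compat; eapply Rle_trans; eauto; apply Rmult_le_compat_l; lra.
Qed.

Lemma exp_decaying_scal c a : exp_decaying a -> exp_decaying (fun n => Cmult c (a n)).
Proof.
  intros [Ha (K & r & Hr & HK & Ba)]. split.
  - apply is_lim_seq_ext with (fun n => Cmod c * Cmod (a n)); [intros; rewrite Cmod_mult; reflexivity|].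
    replace (Finite 0) with (Rbar_mult (Cmod c) 0) by (simpl; f_equal; ring).
    apply is_lim_seq_scal_l, Ha.
  - exists (Cmod c * K), r. split; [exact Hr|]. split; [apply Rmult_le_pos; [apply Cmod_ge_0 | exact HK]|].
    intros n. destruct (Ba n) as [l [Hl Hj]]. exists l. split; [exact Hl|]. intros j Hjl.
    rewrite Cmod_mult, Rmult_assoc. apply Rmult_le_compat_l; [apply Cmod_ge_0 | auto].
Qed.

Lemma exp_decaying_rearrangement a b : exp_decaying a -> is_c0 b ->
  (forall n, dstar b n <= dstar a n) -> exp_decaying b.
Proof.
  intros [Ha (K & r & Hr & HK & Ba)] Hb Hab. split; [exact Hb|].
  destruct (is_c0_bounded b Hb) as [Mb HMb].
  exists (K + 1), r. split; [exact Hr|]. split; [lra|]. intros n.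
  assert (Hrn : 0 < r ^ n) by (apply pow_lt; lra).
  assert (Hdb : dstar b n <= K * r ^ n).
  { destruct (Ba n) as [l [Hl Hj]]. eapply Rle_trans; [apply Hab | apply (dstar_le a n l); auto]. }
  rewrite dstar_tail_sup in Hdb.
  destruct (real_Glb_approx (fun r => exists l : list nat, (length l <= n)%nat /\ r = tail_sup b l)
              0 (r ^ n)) as [t [[l [Hl ->]] Ht]]; [intros t [l [_ ->]]; apply tail_sup_ge0 | | exact Hrn |].
  - exists (tail_sup b nil), nil. simpl. split; [lia | reflexivity].
  - exists l. split; [exact Hl|]. intros j Hj.
    pose proof (tail_sup_ge b l Mb j HMb Hj). lra.
Qed.

Lemma exp_decaying_zero : exp_decaying (fun _ => RtoC 0).
Proof.
  split.
  - apply is_lim_seq_ext with (fun _ => 0); [intros; rewrite Cmod_0; reflexivity | apply is_lim_seq_const].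
  - exists 0, (/ 2). split; [lra|]. split; [lra|]. intros n. exists nil.
    split; [simpl; lia|]. intros j _. rewrite Cmod_0. lra.
Qed.

Lemma exp_decaying_calkin : is_calkin exp_decaying.
Proof.
  split; [intros a [Ha _]; exact Ha|].
  split; [exact exp_decaying_zero|].
  split; [exact exp_decaying_add|].
  split; [exact exp_decaying_scal | exact exp_decaying_rearrangement].
Qed.

Lemma exp_decaying_geometric w : 0 < w < 1 -> exp_decaying (fun n => RtoC (w ^ n)).
Proof.
  intros Hw. assert (HCmod : forall n, Cmod (RtoC (w ^ n)) = w ^ n)
    by (intros n; rewrite Cmod_R, Rabs_right; [reflexivity | apply Rle_ge, pow_le; lra]).
  split.
  - apply is_lim_seq_ext with (fun n => w ^ n); [intros n; rewrite HCmod; reflexivity|].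
    apply is_lim_seq_geom. rewrite Rabs_right; lra.
  - exists 1, w. split; [exact Hw|]. split; [lra|]. intros n. exists (seq 0 n).
    split; [rewrite length_seq; lia|]. intros j Hj. rewrite HCmod, Rmult_1_l.
    apply pow_antitone; [lra|]. destruct (le_lt_dec n j); [auto | exfalso; apply Hj, in_seq; lia].
Qed.

(** * Slow decay of the Hilbert numbers *)

Lemma INR_le_pow2 n : INR n <= 2 ^ n.
Proof.
  induction n; [simpl; lra|]. rewrite S_INR. simpl.
  pose proof (pow_R1_Rle 2 n ltac:(lra)). lra.
Qed.

Lemma INR_sqr_le_pow2 n : (4 <= n)%nat -> INR n * INR n <= 2 ^ n.
Proof.
  induction n; intros Hn; [lia|].
  destruct (Nat.eq_dec n 3) as [-> | Hn3]; [simpl; lra|].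
  specialize (IHn ltac:(lia)). rewrite S_INR. simpl.
  assert (3 <= INR n) by (replace 3 with (INR 3) by (simpl; lra); apply le_INR; lia). nra.
Qed.

(* With [P = 2 ^ m >= m ^ 2] and [r ^ m <= w ^ 2 / 8]:
   [K r ^ (m^2 - 1) = (K / r) (r ^ m) ^ m <= (K / r) w ^ (2 m) / P ^ 3 < w ^ (2 m) / P ^ 2]. *)
Lemma geometric_square_exponent_small K r w : 0 < r < 1 -> 0 < w < 1 -> 0 <= K ->
  exists m, (1 <= m)%nat /\ K * r ^ (m * m - 1) < (mscale m * w ^ m) ^ 2.
Proof.
  intros Hr Hw HK.
  destruct (pow_lt_1_zero r ltac:(rewrite Rabs_right; lra) (w * w / 8) ltac:(nra)) as [M1 HM1].
  destruct (INR_unbounded (K / r)) as [M2 HM2].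
  set (m := (4 + M1 + M2)%nat). exists m. split; [unfold m; lia|].
  set (P := 2 ^ m). set (W := w ^ m).
  assert (HP : 0 < P) by (apply pow_lt; lra).
  assert (HW : 0 < W) by (apply pow_lt; lra).
  assert (Hm0 : 0 < INR m) by (apply lt_0_INR; unfold m; lia).
  assert (HmP : INR m * INR m <= P) by (apply INR_sqr_le_pow2; unfold m; lia).
  assert (HKP : K / r < P).
  { eapply Rlt_le_trans; [apply HM2|]. eapply Rle_trans; [|apply INR_le_pow2].
    apply le_INR. unfold m; lia. }
  assert (Hrm : r ^ m <= w * w / 8).
  { specialize (HM1 m ltac:(unfold m; lia)).
    rewrite Rabs_right in HM1 by (apply Rle_ge, pow_le; lra). lra. }
  assert (Hpow : r ^ (m * m - 1) = / r * (r ^ m) ^ m).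
  { rewrite <- pow_mult. replace (m * m)%nat with (S (m * m - 1)) by (unfold m; nia).
    simpl. field. lra. }
  assert (Hrmm : (r ^ m) ^ m <= W * W / (P * P * P)).
  { eapply Rle_trans; [apply pow_incr; split; [apply pow_le; lra | exact Hrm]|].
    right. unfold W, P. replace (w * w / 8) with (w * w * / 2 ^ 3) by (simpl; field).
    rewrite !Rpow_mult_distr, pow_inv, <- !pow_mult, (Nat.mul_comm 3 m), pow_mult.
    simpl. field. apply pow_nonzero. lra. }
  assert (Hsc : mscale m = / (INR m * INR m)) by (unfold mscale; rewrite mult_INR; reflexivity).
  apply Rle_lt_trans with (K / r * (W * W / (P * P * P))).
  { replace (K * r ^ (m * m - 1)) with (K / r * (r ^ m) ^ m) by (rewrite Hpow; field; lra).
    apply Rmult_le_compat_l; [apply Rdiv_le_0_compat; lra | exact Hrmm]. }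
  apply Rlt_le_trans with (W * W / (P * P)).
  { replace (W * W / (P * P)) with (P * (W * W / (P * P * P))) by (field; lra).
    apply Rmult_lt_compat_r; [|exact HKP].
    pose proof (Rmult_lt_0_compat _ _ HP HP). apply Rdiv_lt_0_compat; nra. }
  rewrite Hsc. fold W. replace ((/ (INR m * INR m) * W) ^ 2) with (W * W / ((INR m * INR m) * (INR m * INR m)))
    by (field; lra).
  pose proof (Rmult_lt_0_compat _ _ Hm0 Hm0) as Hm2.
  apply Rmult_le_compat_l; [nra|]. apply Rinv_le_contravar; [apply Rmult_lt_0_compat; lra|].
  apply Rmult_le_compat; lra.
Qed.

Lemma hnum_MAA_diag_not_exp_decaying {H : HSpace} (e : nat -> H) (He : orthonormal e)
    (w : R) (Hw : 0 < w < 1) :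
  ~ exp_decaying (fun n => RtoC (hnum (MAA (diag_bh e He w Hw)) n)).
Proof.
  intros [_ (K & r & Hr & HK & Hdecay)].
  destruct (geometric_square_exponent_small K r w Hr Hw HK) as [m [Hm Hsmall]].
  destruct (Hdecay (m * m - 1)%nat) as [l [Hl Hbound]].
  destruct (exists_not_In_le l (m * m - 1) Hl) as [j [Hj Hjl]].
  pose proof (hnum_MAA_diag_ge e He m Hm w Hw j ltac:(nia)) as Hlarge.
  specialize (Hbound j Hjl). rewrite Cmod_R in Hbound.
  pose proof (Rle_abs (hnum (MAA (diag_bh e He w Hw)) j)). lra.
Qed.

Theorem proposition4p8 :
  forall (H : HSpace), separable H -> infinite_dim H ->
  forall w : R, 0 < w < 1 ->
  exists A : BH H,
    in_principal (fun n => RtoC (w ^ n)) (fun n => RtoC (snum (proj1_sig A) n)) /\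
    ~ in_principal (fun n => RtoC (w ^ n)) (fun n => RtoC (hnum (MAA A) n)).
Proof.
  intros H _ Hinf w Hw.
  destruct (infinite_dim_orthonormal H Hinf) as [e He].
  exists (diag_bh e He w Hw). split.
  - intros I HI Hgeom.
    apply (calkin_dominated I (fun n => w ^ n) (fun n => snum (diag_op e He w Hw) n) HI Hgeom).
    + intros n. simpl. pose proof (pow_le w n ltac:(lra)). nra.
    + intros n. split; [apply snum_ge0 | apply snum_diag_op_le].
  - intros Hprincipal. apply (hnum_MAA_diag_not_exp_decaying e He w Hw).
    apply Hprincipal; [apply exp_decaying_calkin | apply exp_decaying_geometric, Hw].
Qed.
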